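(* Assume $d_Y\ge2$. Let $\mathcal T$ be the set of $\mathcal Y$-valued transition matrices on $\mathcal X$, viewed as a convex subset of $\mathbb R^{\mathcal Y\times\mathcal X\times\mathcal X}$ with nonempty interior in its affine hull, equipped with the Lebesgue measure of that affine hull, and let $\Delta_{\mathcal X}$ be the probability simplex on $\mathcal X$ with its Lebesgue measure. Then for almost every $(\vec W,P)\in\mathcal T\times\Delta_{\mathcal X}$ one has $K_{\vec W}=\{0\}$ and $\mathcal V^{k_{(P,\vec W)}}(P)=\mathcal V_{\mathcal X}$. Moreover, for almost every $\vec W\in\mathcal T$ (such $\vec W$ being irreducible almost everywhere) one has $K_{\vec W}=\{0\}$ and $\mathcal V^{k_{(P_{\vec W},\vec W)}}(P_{\vec W})=\mathcal V_{\mathcal X}$.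
   Context: Let $\mathcal X=\{1,\dots,d\}$, $\mathcal Y=\{1,\dots,d_Y\}$ be finite sets, $\mathcal V_{\mathcal X}=\mathbb R^{\mathcal X}$ (column vectors; distributions are regarded as vectors in it), $u_{\mathcal X}$ the all-ones vector. A $\mathcal Y$-valued transition matrix on $\mathcal X$ is a family $\vec W=(W_y)_{y\in\mathcal Y}$ of $d\times d$ nonnegative matrices $W_y(x|x')$ ($x$ row, $x'$ column) with $|\vec W|:=\sum_yW_y$ column-stochastic; it is irreducible if $|\vec W|$ is, and then $P_{\vec W}$ is the unique probability vector with $|\vec W|P_{\vec W}=P_{\vec W}$. For $k\ge1$, $P^k[\vec W]:\mathcal V_{\mathcal X}\to\mathbb R^{\mathcal Y^k}$, $(P^k[\vec W]v)(y_k,\dots,y_1)=u_{\mathcal X}^TW_{y_k}\cdots W_{y_1}v$. $k_{\vec W}$ is the least $k_0\ge1$ with $\bigcap_{k\ge1}\operatorname{Ker}P^k[\vec W]=\operatorname{Ker}P^{k_0}[\vec W]$; $K_{\vec W}:=\operatorname{Ker}P^{k_{\vec W}}[\vec W]$; $[v]$ is the class of $v$ in $\mathcal V_{\mathcal X}/K_{\vec W}$. For a distribution $P$ and $k\ge0$, $\mathcal V^k(P)$ is the subspace of $\mathcal V_{\mathcal X}/K_{\vec W}$ spanned by $[W_{y_{k'}}\cdots W_{y_1}P]$, $0\le k'\le k$, $y_i\in\mathcal Y$. $k_{(P,\vec W)}$ is the least $k_1\ge1$ with $\bigcup_{k\ge1}\mathcal V^k(P)=\mathcal V^{k_1}(P)$.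 (When $K_{\vec W}=\{0\}$ the quotient is identified with $\mathcal V_{\mathcal X}$.) *)

From Stdlib Require Import Reals List Arith Bool.
Import ListNotations.
Open Scope R_scope.

(* Indices: X = {0,...,d-1}, Y = {0,...,dY-1} (0-based instead of 1-based). *)

Definition rsum (n : nat) (f : nat -> R) : R :=
  fold_right Rplus 0 (map f (seq 0 n)).

(** A Y-valued transition matrix: W y x x' = W_y(x|x'). *)
Definition is_trans (d dY : nat) (W : nat -> nat -> nat -> R) : Prop :=
  (forall y x x', (y < dY)%nat -> (x < d)%nat -> (x' < d)%nat -> 0 <= W y x x') /\
  (forall x', (x' < d)%nat -> rsum dY (fun y => rsum d (fun x => W y x x')) = 1).

Definition is_prob (d : nat) (P : nat -> R) : Prop :=
  (forall x, (x < d)%nat -> 0 <= P x) /\ rsum d P = 1.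

Definition sumW (dY : nat) (W : nat -> nat -> nat -> R) : nat -> nat -> R :=
  fun x x' => rsum dY (fun y => W y x x').

Fixpoint mpow (d : nat) (M : nat -> nat -> R) (n : nat) : nat -> nat -> R :=
  match n with
  | O => fun i j => if Nat.eqb i j then 1 else 0
  | S n => fun i j => rsum d (fun k => M i k * mpow d M n k j)
  end.

Definition irreducible (d : nat) (M : nat -> nat -> R) : Prop :=
  forall i j, (i < d)%nat -> (j < d)%nat -> exists n, 0 < mpow d M n i j.

Definition stationary (d dY : nat) (W : nat -> nat -> nat -> R) (P : nat -> R) : Prop :=
  is_prob d P /\
  forall x, (x < d)%nat -> rsum d (fun x' => sumW dY W x x' * P x') = P x.

Definition Wapp (d : nat) (W : nat -> nat -> nat -> R) (y : nat) (v : nat -> R) : nat -> R :=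
  fun x => rsum d (fun x' => W y x x' * v x').

(** word [y1; ...; yk] |-> W_{yk} ... W_{y1} v *)
Fixpoint wordapp (d : nat) (W : nat -> nat -> nat -> R) (ys : list nat) (v : nat -> R)
  : nat -> R :=
  match ys with
  | [] => v
  | y :: ys => wordapp d W ys (Wapp d W y v)
  end.

Definition word_ok (dY : nat) (ys : list nat) : Prop := Forall (fun y => (y < dY)%nat) ys.

(** v \in K_W.  By definition of k_W, K_W = Ker P^{k_W} = \bigcap_{k>=1} Ker P^k,
    and v \in Ker P^k iff u^T W_{yk}...W_{y1} v = 0 for all words of length k. *)
Definition inK (d dY : nat) (W : nat -> nat -> nat -> R) (v : nat -> R) : Prop :=
  forall ys, ys <> [] -> word_ok dY ys -> rsum d (wordapp d W ys v) = 0.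

Definition trivK (d dY : nat) (W : nat -> nat -> nat -> R) : Prop :=
  forall v, inK d dY W v -> forall x, (x < d)%nat -> v x = 0.

Definition comb (d : nat) (W : nat -> nat -> nat -> R) (P : nat -> R)
  (l : list (R * list nat)) : nat -> R :=
  fun x => fold_right (fun cw acc => fst cw * wordapp d W (snd cw) P x + acc) 0 l.

(** By definition of k_(P,W),
    V^{k_(P,W)}(P) = \bigcup_k V^k(P), the span in V_X/K_W of all classes
    [W_{yk'}...W_{y1} P]; it is everything iff every v is, modulo K_W,
    a finite linear combination of such vectors. *)
Definition fullV (d dY : nat) (W : nat -> nat -> nat -> R) (P : nat -> R) : Prop :=
  forall v : nat -> R, exists l : list (R * list nat),
    Forall (fun cw => word_ok dY (snd cw)) l /\
    inK d dY W (fun x => v x - comb d W P l x).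

(* A point is a function z : I -> R; only coordinates in the finite list idx matter. *)
Definition vol {I : Type} (idx : list I) (a b : I -> R) : R :=
  fold_right Rmult 1 (map (fun i => b i - a i) idx).

Definition null_set {I : Type} (idx : list I) (S : (I -> R) -> Prop) : Prop :=
  forall eps, 0 < eps -> exists a b : nat -> I -> R,
    (forall k i, In i idx -> a k i <= b k i) /\
    (forall z, S z -> exists k, forall i, In i idx -> a k i <= z i <= b k i) /\
    (forall N, sum_f_R0 (fun k => vol idx (a k) (b k)) N < eps).

Definition agree {I : Type} (idx : list I) (z z' : I -> R) : Prop :=
  forall i, In i idx -> z i = z' i.

(* Affine coordinates on the affine hull of T: all entries W y x x' except
   (y,x) = (0,0) (the entry W 0 0 x' is determined by column-stochasticity).
   This is an affine isomorphism from aff(T) onto R^(dY*d*d - d), so Lebesgue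
   measure on aff(T) corresponds (up to a constant) to Lebesgue measure in these
   coordinates; likewise P 1..P (d-1) for the simplex. *)
Definition W_idx (d dY : nat) : list (nat * nat * nat) :=
  flat_map (fun y => flat_map (fun x => flat_map (fun x' =>
     if (Nat.eqb y 0 && Nat.eqb x 0)%bool then [] else [(y, x, x')])
     (seq 0 d)) (seq 0 d)) (seq 0 dY).

Definition W_coords (W : nat -> nat -> nat -> R) : nat * nat * nat -> R :=
  fun t => match t with (y, x, x') => W y x x' end.

Definition P_idx (d : nat) : list nat := seq 1 (d - 1).

Definition pair_idx (d dY : nat) : list ((nat * nat * nat) + nat) :=
  map inl (W_idx d dY) ++ map inr (P_idx d).

Definition pair_coords (W : nat -> nat -> nat -> R) (P : nat -> R)
  : (nat * nat * nat) + nat -> R :=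
  fun t => match t with inl t => W_coords W t | inr x => P x end.

From Stdlib Require Import Reals List Arith Bool Lra Lia.
From Stdlib Require Import Classical ClassicalEpsilon FunctionalExtensionality.
From mathcomp Require all_boot all_algebra all_fingroup Rstruct.
Import ListNotations.
Open Scope R_scope.

(* Each property fails only on the zero set of a polynomial in the affine coordinates.
   [K_W = {0}] as soon as the [d] linear forms [v |-> u^T W_w v], for suitable test words
   [w], are independent, and [V^k(P)] is everything as soon as [P, W_1 P, ..., W_1^(d-1) P]
   are; both are determinant conditions. [|W|] is irreducible as soon as all its entries
   are positive, and by Cramer's rule [det (I + e_0 u^T - |W|) P_W] is polynomial in [W].
   None of these polynomials vanishes identically, as an explicit point of the cube built
   from the shift matrix shows. Finally, the zero set of a polynomial that does not vanish
   on the cube is null: by induction on the variables and the degree, where [|d e/d z_t|]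
   is bounded below the [t]-fibres of [{|e| small}] are short, and where it vanishes
   identically [e] does not depend on [z_t]. *)

(** * Polynomial expressions *)

Section Polynomials.
Context {I : Type}.
Variable dec : forall x y : I, {x = y} + {x <> y}.

Inductive pexpr : Type :=
| PConst (c : R) | PVar (i : I) | PAdd (a b : pexpr) | PMul (a b : pexpr).

Fixpoint peval (z : I -> R) (e : pexpr) : R :=
  match e with
  | PConst c => c
  | PVar i => z i
  | PAdd a b => peval z a + peval z b
  | PMul a b => peval z a * peval z b
  end.

Fixpoint occurs (t : I) (e : pexpr) : Prop :=
  match e with
  | PConst _ => False
  | PVar i => i = t
  | PAdd a b | PMul a b => occurs t a \/ occurs t b
  end.

Definition vars_in (idx : list I) (e : pexpr) : Prop := forall i, occurs i e -> In i idx.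

Definition upd (z : I -> R) (t : I) (s : R) : I -> R :=
  fun j => if dec j t then s else z j.

Fixpoint pdeg (t : I) (e : pexpr) : nat :=
  match e with
  | PConst _ => 0
  | PVar i => if dec i t then 1 else 0
  | PAdd a b => Nat.max (pdeg t a) (pdeg t b)
  | PMul a b => pdeg t a + pdeg t b
  end.

(* Factors of degree 0 are dropped from the product rule so that the degree drops. *)
Fixpoint pderiv (t : I) (e : pexpr) : pexpr :=
  match e with
  | PConst _ => PConst 0
  | PVar i => if dec i t then PConst 1 else PConst 0
  | PAdd a b => PAdd (pderiv t a) (pderiv t b)
  | PMul a b => PAdd (if Nat.eqb (pdeg t a) 0 then PConst 0 else PMul (pderiv t a) b)
                     (if Nat.eqb (pdeg t b) 0 then PConst 0 else PMul a (pderiv t b))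
  end.

Fixpoint psubst (t : I) (c : R) (e : pexpr) : pexpr :=
  match e with
  | PConst c' => PConst c'
  | PVar i => if dec i t then PConst c else PVar i
  | PAdd a b => PAdd (psubst t c a) (psubst t c b)
  | PMul a b => PMul (psubst t c a) (psubst t c b)
  end.

(** Explicit bounds for [|e|] and for the Lipschitz constant of [e] on the cube. *)
Fixpoint pbound (e : pexpr) : R :=
  match e with
  | PConst c => Rabs c
  | PVar _ => 1
  | PAdd a b => pbound a + pbound b
  | PMul a b => pbound a * pbound b
  end.

Fixpoint plip (e : pexpr) : R :=
  match e with
  | PConst c => 0
  | PVar _ => 1
  | PAdd a b => plip a + plip b
  | PMul a b => pbound a * plip b + pbound b * plip a
  end.

Definition in_cube (idx : list I) (z : I -> R) : Prop :=
  forall i, In i idx -> -1 <= z i <= 1.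

Definition psum_list (l : list pexpr) : pexpr := fold_right PAdd (PConst 0) l.
Definition pprod_list (l : list pexpr) : pexpr := fold_right PMul (PConst 1) l.

Lemma peval_psum_list z l : peval z (psum_list l) = fold_right Rplus 0 (map (peval z) l).
Proof. induction l; simpl; congruence. Qed.

Lemma peval_pprod_list z l : peval z (pprod_list l) = fold_right Rmult 1 (map (peval z) l).
Proof. induction l; simpl; congruence. Qed.

Lemma vars_in_psum_list idx l : (forall e, In e l -> vars_in idx e) -> vars_in idx (psum_list l).
Proof.
  induction l as [|e l IH]; intros H i Hi; simpl in Hi; [contradiction|].
  destruct Hi as [Hi|Hi]; [apply (H e); simpl; auto|].
  apply IH; auto. intros e' He'. apply H. simpl; auto.
Qed.

Lemma vars_in_pprod_list idx l : (forall e, In e l -> vars_in idx e) -> vars_in idx (pprod_list l).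
Proof.
  induction l as [|e l IH]; intros H i Hi; simpl in Hi; [contradiction|].
  destruct Hi as [Hi|Hi]; [apply (H e); simpl; auto|].
  apply IH; auto. intros e' He'. apply H. simpl; auto.
Qed.

Lemma peval_ext e z z' : (forall i, occurs i e -> z i = z' i) -> peval z e = peval z' e.
Proof. induction e; simpl; intros H; auto; rewrite IHe1, IHe2; auto. Qed.

Lemma pdeg0_not_occurs t e : pdeg t e = 0%nat -> ~ occurs t e.
Proof.
  induction e; simpl; auto.
  - destruct (dec i t); [discriminate | auto].
  - intros H [H1|H1]; [apply IHe1|apply IHe2]; auto; lia.
  - intros H [H1|H1]; [apply IHe1|apply IHe2]; auto; lia.
Qed.

Lemma peval_upd_not_occurs t e z s : ~ occurs t e -> peval (upd z t s) e = peval z e.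
Proof.
  intros H. apply peval_ext. intros i Hi. unfold upd.
  destruct (dec i t); auto. subst; contradiction.
Qed.

Lemma upd_same z t : upd z t (z t) = z.
Proof.
  apply functional_extensionality. intros i. unfold upd. destruct (dec i t); subst; auto.
Qed.

Lemma pdeg_pderiv t e : (pdeg t (pderiv t e) <= pdeg t e - 1)%nat.
Proof.
  induction e; simpl; try lia.
  - destruct (dec i t); simpl; lia.
  - destruct (Nat.eqb_spec (pdeg t e1) 0), (Nat.eqb_spec (pdeg t e2) 0); simpl; lia.
Qed.

Lemma occurs_pderiv t e i : occurs i (pderiv t e) -> occurs i e.
Proof.
  induction e; simpl; auto.
  - destruct (dec i0 t); simpl; tauto.
  - tauto.
  - destruct (Nat.eqb (pdeg t e1) 0), (Nat.eqb (pdeg t e2) 0); simpl; tauto.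
Qed.

Lemma peval_psubst t c e z : peval z (psubst t c e) = peval (upd z t c) e.
Proof.
  induction e; simpl; auto; try (rewrite IHe1, IHe2; auto).
  unfold upd. destruct (dec i t); reflexivity.
Qed.

Lemma occurs_psubst t c e i : occurs i (psubst t c e) -> occurs i e /\ i <> t.
Proof.
  induction e; simpl; try tauto.
  destruct (dec i0 t); simpl; [tauto|]. intros; subst; auto.
Qed.

Lemma derivable_pt_lim_constant (f : R -> R) c x : (forall s, f s = c) -> derivable_pt_lim f x 0.
Proof.
  intros H. replace f with (fun _ : R => c).
  - apply derivable_pt_lim_const.
  - apply functional_extensionality; auto.
Qed.

Lemma pderiv_correct t e z s0 :
  derivable_pt_lim (fun s => peval (upd z t s) e) s0 (peval (upd z t s0) (pderiv t e)).
Proof.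
  induction e; simpl.
  - apply derivable_pt_lim_constant with c; auto.
  - destruct (dec i t) as [->|Hit]; simpl.
    + replace (fun s => upd z t s t) with (fun s : R => s).
      * apply derivable_pt_lim_id.
      * apply functional_extensionality; intros; unfold upd; destruct (dec t t); tauto.
    + apply derivable_pt_lim_constant with (z i).
      intros; unfold upd; destruct (dec i t); tauto.
  - apply (derivable_pt_lim_plus (fun s => peval (upd z t s) e1) (fun s => peval (upd z t s) e2));
      auto.
  - assert (Hdeg0 : forall e, derivable_pt_lim (fun s => peval (upd z t s) e) s0
                                 (peval (upd z t s0) (pderiv t e)) ->
                       pdeg t e = 0%nat -> peval (upd z t s0) (pderiv t e) = 0).
    { intros e IH Hd. apply (uniqueness_limite (fun s => peval (upd z t s) e) s0); [exact IH|].
      apply derivable_pt_lim_constant with (peval z e).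
      intros; apply peval_upd_not_occurs, pdeg0_not_occurs; auto. }
    match goal with |- derivable_pt_lim _ _ ?l => replace l with
      (peval (upd z t s0) (pderiv t e1) * peval (upd z t s0) e2 +
       peval (upd z t s0) e1 * peval (upd z t s0) (pderiv t e2)) end.
    + exact (derivable_pt_lim_mult _ _ s0 _ _ IHe1 IHe2).
    + destruct (Nat.eqb_spec (pdeg t e1) 0), (Nat.eqb_spec (pdeg t e2) 0); simpl;
        try rewrite (Hdeg0 e1) by auto; try rewrite (Hdeg0 e2) by auto; ring.
Qed.

Lemma pbound_nonneg e : 0 <= pbound e.
Proof. induction e; simpl; try lra. apply Rabs_pos. apply Rmult_le_pos; auto. Qed.

Lemma pbound_correct idx e z : vars_in idx e -> in_cube idx z -> Rabs (peval z e) <= pbound e.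
Proof.
  unfold vars_in; induction e; simpl; intros Hv Hz.
  - lra.
  - specialize (Hz i (Hv i eq_refl)). apply Rabs_le; lra.
  - eapply Rle_trans; [apply Rabs_triang|].
    apply Rplus_le_compat; [apply IHe1|apply IHe2]; auto.
  - rewrite Rabs_mult.
    apply Rmult_le_compat; try apply Rabs_pos; [apply IHe1|apply IHe2]; auto.
Qed.

Lemma plip_nonneg e : 0 <= plip e.
Proof.
  induction e; simpl; try lra.
  pose proof (pbound_nonneg e1); pose proof (pbound_nonneg e2).
  apply Rplus_le_le_0_compat; apply Rmult_le_pos; auto.
Qed.

Lemma plip_correct idx e z z' eta : vars_in idx e -> in_cube idx z -> in_cube idx z' ->
  (forall i, In i idx -> Rabs (z i - z' i) <= eta) ->
  Rabs (peval z e - peval z' e) <= plip e * eta.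
Proof.
  intros Hv Hz Hz' Hd. unfold vars_in in Hv. induction e; simpl in *.
  - rewrite Rminus_diag, Rabs_R0; lra.
  - rewrite Rmult_1_l. apply Hd, Hv; auto.
  - replace (peval z e1 + peval z e2 - (peval z' e1 + peval z' e2)) with
      ((peval z e1 - peval z' e1) + (peval z e2 - peval z' e2)) by ring.
    eapply Rle_trans; [apply Rabs_triang|]. rewrite Rmult_plus_distr_r.
    apply Rplus_le_compat; [apply IHe1|apply IHe2]; auto.
  - assert (V1 : vars_in idx e1) by (intros i Hi; apply Hv; auto).
    assert (V2 : vars_in idx e2) by (intros i Hi; apply Hv; auto).
    replace (peval z e1 * peval z e2 - peval z' e1 * peval z' e2) with
      (peval z e1 * (peval z e2 - peval z' e2) + peval z' e2 * (peval z e1 - peval z' e1))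
      by ring.
    eapply Rle_trans; [apply Rabs_triang|]. rewrite !Rabs_mult.
    rewrite Rmult_plus_distr_r, !Rmult_assoc.
    apply Rplus_le_compat; apply Rmult_le_compat; try apply Rabs_pos.
    + apply (pbound_correct idx); auto.
    + apply IHe2; auto.
    + apply (pbound_correct idx); auto.
    + apply IHe1; auto.
Qed.

Lemma in_cube_upd idx z t s : in_cube idx z -> -1 <= s <= 1 -> in_cube idx (upd z t s).
Proof. intros H Hs i Hi. unfold upd. destruct (dec i t); auto. Qed.

Lemma peval_MVT t e z s1 s2 : -1 <= s1 <= 1 -> -1 <= s2 <= 1 ->
  exists xi, -1 <= xi <= 1 /\ Rabs (xi - s1) <= Rabs (s2 - s1) /\
    peval (upd z t s2) e - peval (upd z t s1) e = peval (upd z t xi) (pderiv t e) * (s2 - s1).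
Proof.
  intros H1 H2.
  destruct (Rtotal_order s1 s2) as [L|[<-|L]].
  - destruct (MVT_cor2 (fun s => peval (upd z t s) e) (fun s => peval (upd z t s) (pderiv t e))
                s1 s2 L) as [c [Hc1 Hc2]]; [intros; apply pderiv_correct|].
    exists c. split; [lra|]. split; [rewrite !Rabs_right; lra|]. exact Hc1.
  - exists s1. split; auto. split; [rewrite Rminus_diag, Rabs_R0; lra|]. ring.
  - destruct (MVT_cor2 (fun s => peval (upd z t s) e) (fun s => peval (upd z t s) (pderiv t e))
                s2 s1 L) as [c [Hc1 Hc2]]; [intros; apply pderiv_correct|].
    exists c. split; [lra|]. split; [rewrite !Rabs_left; lra|].
    replace (peval (upd z t s2) e - peval (upd z t s1) e)
      with (- (peval (upd z t s1) e - peval (upd z t s2) e)) by ring.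
    rewrite Hc1. ring.
Qed.

End Polynomials.

Arguments pexpr : clear implicits.

(** * Finite box covers *)

Section BoxCovers.
Context {I : Type}.
Variable idx : list I.

Definition box : Type := ((I -> R) * (I -> R))%type.
Definition box_wf (b : box) : Prop := forall i, In i idx -> fst b i <= snd b i.
Definition in_box (b : box) (z : I -> R) : Prop :=
  forall i, In i idx -> fst b i <= z i <= snd b i.
Definition box_vol (b : box) : R := vol idx (fst b) (snd b).
Definition total_vol (bs : list box) : R := fold_right Rplus 0 (map box_vol bs).

Definition covered_by_boxes (S : (I -> R) -> Prop) (eps : R) : Prop :=
  exists bs, Forall box_wf bs /\ total_vol bs < eps /\
             forall z, S z -> exists b, In b bs /\ in_box b z.

Definition negligible (S : (I -> R) -> Prop) : Prop :=
  forall eps, 0 < eps -> covered_by_boxes S eps.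

Lemma box_vol_nonneg b : box_wf b -> 0 <= box_vol b.
Proof.
  unfold box_wf, box_vol, vol. destruct b as [a c]; simpl.
  induction idx as [|i l IH]; simpl; intros H; [lra|].
  apply Rmult_le_pos; [specialize (H i (or_introl eq_refl)); lra|].
  apply IH; auto.
Qed.

Lemma total_vol_app l1 l2 : total_vol (l1 ++ l2) = total_vol l1 + total_vol l2.
Proof. unfold total_vol; induction l1; simpl; [ring|]. rewrite IHl1; ring. Qed.

Lemma total_vol_le l V0 : (forall b, In b l -> box_vol b <= V0) ->
  total_vol l <= INR (length l) * V0.
Proof.
  induction l as [|b l IH]; unfold total_vol in *; cbn [length map fold_right]; intros H.
  - simpl; lra.
  - rewrite S_INR. pose proof (H b (or_introl eq_refl)).
    assert (fold_right Rplus 0 (map box_vol l) <= INR (length l) * V0)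
      by (apply IH; intros; apply H; simpl; auto).
    lra.
Qed.

Lemma covered_by_boxes_sub (S1 S2 : (I -> R) -> Prop) eps :
  (forall z, S1 z -> S2 z) -> covered_by_boxes S2 eps -> covered_by_boxes S1 eps.
Proof. intros H [bs [W [V C]]]. exists bs; repeat split; auto. Qed.

Lemma covered_by_boxes_union (S1 S2 : (I -> R) -> Prop) eps1 eps2 :
  covered_by_boxes S1 eps1 -> covered_by_boxes S2 eps2 ->
  covered_by_boxes (fun z => S1 z \/ S2 z) (eps1 + eps2).
Proof.
  intros [b1 [W1 [V1 C1]]] [b2 [W2 [V2 C2]]].
  exists (b1 ++ b2). split; [apply Forall_app; auto|]. split; [rewrite total_vol_app; lra|].
  intros z [Hz|Hz]; [destruct (C1 z Hz) as [b [Hb Hb']]|destruct (C2 z Hz) as [b [Hb Hb']]];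
    exists b; split; auto; apply in_or_app; auto.
Qed.

Lemma negligible_sub (S1 S2 : (I -> R) -> Prop) :
  (forall z, S1 z -> S2 z) -> negligible S2 -> negligible S1.
Proof. intros H N eps He. exact (covered_by_boxes_sub S1 S2 eps H (N eps He)). Qed.

Lemma negligible_union (S1 S2 : (I -> R) -> Prop) :
  negligible S1 -> negligible S2 -> negligible (fun z => S1 z \/ S2 z).
Proof.
  intros N1 N2 eps He. replace eps with (eps / 2 + eps / 2) by field.
  apply covered_by_boxes_union; [apply N1|apply N2]; lra.
Qed.

Lemma negligible_empty (S : (I -> R) -> Prop) : (forall z, ~ S z) -> negligible S.
Proof.
  intros H eps He. exists []. split; [constructor|]. split; [unfold total_vol; simpl; lra|].
  intros z Hz; exfalso; eapply H; eauto.
Qed.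

Lemma sum_f_R0_nth_le (l : list R) N : Forall (fun x => 0 <= x) l ->
  sum_f_R0 (fun k => nth k l 0) N <= fold_right Rplus 0 l.
Proof.
  revert N; induction l as [|x l IH]; intros N H.
  - simpl. induction N; simpl; [lra|]. destruct N; simpl in *; lra.
  - inversion H as [|? ? Hx Hl]; subst. destruct N.
    + simpl. assert (0 <= fold_right Rplus 0 l) by (clear -Hl; induction Hl; simpl; lra).
      lra.
    + rewrite decomp_sum by lia. simpl. specialize (IH N Hl). lra.
Qed.

(* Padding the finite cover with degenerate boxes needs [idx <> []], so that they have
   volume 0. *)
Lemma negligible_null_set S : idx <> [] -> negligible S -> null_set idx S.
Proof.
  intros Hne N eps He. destruct (N eps He) as [bs [W [V C]]].
  set (b0 := ((fun _ : I => 0), (fun _ : I => 0)) : box).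
  assert (Hb0 : box_vol b0 = 0)
    by (unfold box_vol, vol; destruct idx; [congruence|]; simpl; ring).
  exists (fun k => fst (nth k bs b0)), (fun k => snd (nth k bs b0)).
  split; [|split].
  - intros k i Hi. destruct (Nat.lt_ge_cases k (length bs)).
    + rewrite Forall_forall in W. apply W; auto. apply nth_In; auto.
    + rewrite nth_overflow by auto. simpl; lra.
  - intros z Hz. destruct (C z Hz) as [b [Hb Hb']].
    destruct (In_nth _ _ b0 Hb) as [k [Hk <-]]. exists k. exact Hb'.
  - intros M. eapply Rle_lt_trans; [|apply V]. unfold total_vol.
    replace (sum_f_R0 (fun k => vol idx (fst (nth k bs b0)) (snd (nth k bs b0))) M)
      with (sum_f_R0 (fun k => nth k (map box_vol bs) 0) M).
    + apply sum_f_R0_nth_le. rewrite Forall_forall in *. intros x Hx.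
      apply in_map_iff in Hx. destruct Hx as [b [<- Hb]]. apply box_vol_nonneg; auto.
    + apply sum_eq. intros k _. rewrite <- Hb0, map_nth. reflexivity.
Qed.

End BoxCovers.

Lemma length_flat_map_const {A B} (g : A -> list B) (l : list A) K :
  (forall a, length (g a) = K) -> length (flat_map g l) = (length l * K)%nat.
Proof. intros H; induction l; simpl; auto. rewrite length_app, H, IHl. lia. Qed.

Lemma nat_floor N y : (1 <= N)%nat -> 0 <= y <= INR N ->
  exists j, (j < N)%nat /\ INR j <= y <= INR j + 1.
Proof.
  induction N; intros HN Hy; [lia|].
  destruct (Nat.eq_dec N 0) as [->|E].
  - exists 0%nat. simpl in *. split; [lia|]. lra.
  - destruct (Rle_dec y (INR N)) as [L|L].
    + destruct IHN as [j [Hj Hj']]; [lia|lra|]. exists j; split; auto.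
    + exists N. split; [lia|]. rewrite S_INR in Hy. lra.
Qed.

Definition in_cell (h : R) (j : nat) (x : R) : Prop := -1 + h * INR j <= x <= -1 + h * INR j + h.

(* Stated for every [x], so that a cell index can be chosen as a function of [x]. *)
Lemma cell_exists N x : (1 <= N)%nat ->
  exists j, (j < N)%nat /\ (-1 <= x <= 1 -> in_cell (2 / INR N) j x).
Proof.
  intros HN. assert (HNp : 0 < INR N) by (apply lt_0_INR; lia).
  destruct (Rle_dec (-1) x) as [L1|L1]; [destruct (Rle_dec x 1) as [L2|L2]|];
    [|exists 0%nat; split; [lia|intros; lra]..].
  destruct (nat_floor N ((x + 1) * INR N / 2) HN) as [j [Hj [Hj1 Hj2]]].
  { split; [apply Rmult_le_pos; [apply Rmult_le_pos|]; lra|].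
    apply (Rmult_le_reg_r 2); [lra|]. unfold Rdiv. rewrite Rmult_assoc, Rinv_l by lra. nra. }
  exists j; split; auto. intros _. unfold in_cell.
  assert (Hh : 0 < 2 / INR N) by (apply Rdiv_lt_0_compat; lra).
  assert (E : x + 1 = 2 / INR N * ((x + 1) * INR N / 2)) by (field; lra).
  assert (2 / INR N * INR j <= 2 / INR N * ((x + 1) * INR N / 2))
    by (apply Rmult_le_compat_l; lra).
  assert (2 / INR N * ((x + 1) * INR N / 2) <= 2 / INR N * (INR j + 1))
    by (apply Rmult_le_compat_l; lra).
  lra.
Qed.

Section Grid.
Context {I : Type}.
Variable dec : forall x y : I, {x = y} + {x <> y}.

Definition set_cell (f : I -> nat) (i : I) (j : nat) : I -> nat :=
  fun k => if dec k i then j else f k.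

Fixpoint grid_cells (N : nat) (l : list I) : list (I -> nat) :=
  match l with
  | [] => [fun _ => 0%nat]
  | i :: l' => flat_map (fun f => map (set_cell f i) (seq 0 N)) (grid_cells N l')
  end.

Lemma grid_cells_length N l : length (grid_cells N l) = Nat.pow N (length l).
Proof.
  induction l; simpl; auto. rewrite (length_flat_map_const _ _ N).
  - rewrite IHl. lia.
  - intros; rewrite length_map, length_seq; auto.
Qed.

Lemma grid_cells_complete N l (g : I -> nat) : (forall i, In i l -> (g i < N)%nat) ->
  exists f, In f (grid_cells N l) /\ forall i, In i l -> f i = g i.
Proof.
  induction l as [|a l IH]; intros H; simpl.
  - exists (fun _ => 0%nat); split; auto. intros i [].
  - destruct IH as [f0 [Hf Hf']]; [intros; apply H; simpl; auto|].
    exists (set_cell f0 a (g a)). split.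
    + apply in_flat_map. exists f0; split; auto. apply in_map_iff. exists (g a); split; auto.
      apply in_seq. specialize (H a (or_introl eq_refl)). lia.
    + intros i Hi. unfold set_cell. destruct (dec i a); [subst; auto|].
      destruct Hi; [congruence|auto].
Qed.

Variable t : I.

Definition others (l : list I) : list I := filter (fun i => if dec i t then false else true) l.

Definition slab (h : R) (f : I -> nat) (c r : R) : box :=
  ((fun i => if dec i t then c - r else -1 + h * INR (f i)),
   (fun i => if dec i t then c + r else -1 + h * INR (f i) + h)).

(* [t] may occur several times in [l]; the factor [w <= 1] is then kept only once. *)
Lemma vol_slab_le l (a b : I -> R) h w : 0 <= h -> 0 <= w <= 1 ->
  (forall i, i <> t -> b i - a i = h) -> b t - a t = w ->
  0 <= vol l a b <= h ^ length (others l) /\ (In t l -> vol l a b <= h ^ length (others l) * w).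
Proof.
  intros Hh Hw Hb Ht. unfold vol, others. induction l as [|i l [[IH0 IH1] IH2]]; simpl.
  - split; [lra|]. intros [].
  - destruct (dec i t) as [->|Hit]; simpl.
    + rewrite Ht. split; [split|].
      * apply Rmult_le_pos; lra.
      * rewrite <- (Rmult_1_l (h ^ _)). apply Rmult_le_compat; lra.
      * intros _. rewrite Rmult_comm. apply Rmult_le_compat; lra.
    + rewrite (Hb i Hit). split; [split|].
      * apply Rmult_le_pos; lra.
      * apply Rmult_le_compat_l; lra.
      * intros [->|Hin]; [congruence|]. rewrite Rmult_assoc. apply Rmult_le_compat_l; auto.
Qed.

Variable idx : list I.
Hypothesis Ht : In t idx.

Section Cover.
Variables (N K : nat) (r : R) (S : (I -> R) -> Prop).
Hypotheses (HN : (1 <= N)%nat) (HK : (1 <= K)%nat) (Hr : 0 <= 2 * r <= 1).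

Let h := 2 / INR N.

Definition in_grid_cell (f : I -> nat) (j : nat) (p : I -> R) : Prop :=
  (forall i, In i idx -> i <> t -> in_cell h (f i) (p i)) /\ in_cell (2 / INR K) j (p t).

(* The slab of the grid cell [(f, j)] is centred at some point of [S] in that cell. *)
Definition cell_slab (f : I -> nat) (j : nat) : box :=
  match excluded_middle_informative (exists p, S p /\ in_grid_cell f j p) with
  | left H => slab h f (proj1_sig (constructive_indefinite_description _ H) t) r
  | right _ => slab h f 0 0
  end.

Definition cell_slabs : list box :=
  flat_map (fun f => map (cell_slab f) (seq 0 K)) (grid_cells N (others idx)).

Lemma cell_slabs_wf : Forall (box_wf idx) cell_slabs.
Proof.
  assert (Hh : 0 <= h) by (apply Rlt_le, Rdiv_lt_0_compat; [lra|apply lt_0_INR; lia]).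
  apply Forall_forall. intros b Hb. apply in_flat_map in Hb. destruct Hb as [f [_ Hb]].
  apply in_map_iff in Hb. destruct Hb as [j [<- _]].
  intros i Hi. unfold cell_slab. destruct excluded_middle_informative; unfold slab; simpl;
    destruct (dec i t); lra.
Qed.

Lemma total_vol_cell_slabs : total_vol idx cell_slabs <= 2 ^ length idx * INR K * (2 * r).
Proof.
  assert (HNp : 0 < INR N) by (apply lt_0_INR; lia).
  assert (Hh : 0 <= h) by (apply Rlt_le, Rdiv_lt_0_compat; lra).
  set (m := length (others idx)).
  eapply Rle_trans; [apply total_vol_le with (V0 := h ^ m * (2 * r))|].
  - intros b Hb. apply in_flat_map in Hb. destruct Hb as [f [_ Hb]].
    apply in_map_iff in Hb. destruct Hb as [j [<- _]]. unfold cell_slab, box_vol.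
    destruct excluded_middle_informative; unfold slab; simpl.
    + apply vol_slab_le; auto;
        [intros i Hit; destruct (dec i t)|destruct (dec t t)]; try congruence; ring.
    + pose proof (pow_le h m Hh).
      eapply Rle_trans; [apply (vol_slab_le idx _ _ h 0)|]; try lra.
      all: try (intros i Hit; destruct (dec i t); try congruence; ring).
      destruct (dec t t); [ring|congruence].
      exact Ht. fold m. nra.
  - unfold cell_slabs. rewrite (length_flat_map_const _ _ K) by (intros; rewrite length_map, length_seq; auto).
    rewrite grid_cells_length, mult_INR, pow_INR. fold m.
    replace (INR N ^ m * INR K * (h ^ m * (2 * r))) with ((INR N * h) ^ m * INR K * (2 * r))
      by (rewrite Rpow_mult_distr; ring).
    replace (INR N * h) with 2 by (unfold h; field; lra).
    assert (2 ^ m <= 2 ^ length idx) by (apply Rle_pow; [lra|apply filter_length_le]).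
    assert (0 <= INR K * (2 * r)) by (apply Rmult_le_pos; [apply pos_INR|lra]).
    apply Rmult_le_compat_r; [lra|]. apply Rmult_le_compat_r; [apply pos_INR|auto].
Qed.

Lemma cell_slabs_cover_clustered :
  (forall z, S z -> in_cube idx z) ->
  (forall p q, S p -> S q -> (forall i, In i idx -> i <> t -> Rabs (p i - q i) <= h) ->
     Rabs (p t - q t) <= 2 / INR K -> Rabs (p t - q t) <= r) ->
  forall z, S z -> exists b, In b cell_slabs /\ in_box idx b z.
Proof.
  intros HS Hcl z Hz. pose proof (HS z Hz) as Hzc.
  set (g := fun i => proj1_sig (constructive_indefinite_description _ (cell_exists N (z i) HN))).
  assert (Hg : forall i, (g i < N)%nat /\ (-1 <= z i <= 1 -> in_cell h (g i) (z i))).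
  { intros i. unfold g. destruct constructive_indefinite_description; simpl; auto. }
  destruct (grid_cells_complete N (others idx) g) as [f [Hf Hf']]; [intros; apply Hg|].
  destruct (cell_exists K (z t) HK) as [j [Hj Hj']].
  assert (Hin : in_grid_cell f j z).
  { split.
    - intros i Hi Hit. rewrite Hf'; [apply Hg, Hzc; auto|].
      apply filter_In. split; auto. destruct (dec i t); congruence.
    - apply Hj', Hzc; auto. }
  exists (cell_slab f j). split.
  - apply in_flat_map. exists f. split; auto. apply in_map_iff. exists j; split; auto.
    apply in_seq; lia.
  - unfold cell_slab. destruct excluded_middle_informative as [e|n]; [|exfalso; eauto].
    destruct (constructive_indefinite_description _ e) as [p [Sp [Cp1 Cp2]]]; simpl.
    destruct Hin as [Ci1 Ci2].
    assert (Hd : Rabs (p t - z t) <= r).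
    { apply Hcl; auto.
      - intros i Hi Hit. specialize (Cp1 i Hi Hit). specialize (Ci1 i Hi Hit).
        unfold in_cell in *. apply Rabs_le. lra.
      - unfold in_cell in *. apply Rabs_le. lra. }
    intros i Hi. unfold slab; simpl. destruct (dec i t) as [->|Hit].
    + revert Hd. unfold Rabs. destruct Rcase_abs; lra.
    + apply Ci1; auto.
Qed.

End Cover.

Lemma cover_clustered (N K : nat) (r : R) (S : (I -> R) -> Prop) :
  (1 <= N)%nat -> (1 <= K)%nat -> 0 <= 2 * r <= 1 ->
  (forall z, S z -> in_cube idx z) ->
  (forall p q, S p -> S q -> (forall i, In i idx -> i <> t -> Rabs (p i - q i) <= 2 / INR N) ->
     Rabs (p t - q t) <= 2 / INR K -> Rabs (p t - q t) <= r) ->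
  exists bs, Forall (box_wf idx) bs /\ total_vol idx bs <= 2 ^ length idx * INR K * (2 * r) /\
    forall z, S z -> exists b, In b bs /\ in_box idx b z.
Proof.
  intros HN HK Hr HS Hcl. exists (cell_slabs N K r S).
  split; [|split].
  - apply cell_slabs_wf; auto.
  - apply total_vol_cell_slabs; auto.
  - apply cell_slabs_cover_clustered; auto.
Qed.

End Grid.

(** * Zero sets of polynomials are negligible *)

Lemma exists_mesh L tau : 0 <= L -> 0 < tau -> exists N, (1 <= N)%nat /\ L * (2 / INR N) <= tau.
Proof.
  intros HL Htau. destruct (INR_archimed 1 (2 * (L + 1) / tau)) as [N HN]; [lra|].
  rewrite Rmult_1_r in HN.
  assert (Hpos : 0 < 2 * (L + 1) / tau) by (apply Rdiv_lt_0_compat; lra).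
  assert (HN1 : (1 <= N)%nat) by (destruct N; [simpl in HN; lra|lia]).
  assert (HNp : 0 < INR N) by (apply lt_0_INR; lia).
  exists N. split; auto.
  apply (Rmult_le_reg_r (INR N / tau)); [apply Rdiv_lt_0_compat; lra|].
  replace (L * (2 / INR N) * (INR N / tau)) with (2 * L / tau) by (field; lra).
  replace (tau * (INR N / tau)) with (INR N) by (field; lra).
  assert (2 * L / tau <= 2 * (L + 1) / tau)
    by (apply Rmult_le_compat_r; [apply Rlt_le, Rinv_0_lt_compat|]; lra).
  lra.
Qed.

Section ZeroSets.
Context {I : Type}.
Variable dec : forall x y : I, {x = y} + {x <> y}.
Variable idx : list I.

Lemma peval_pderiv_pdeg0 t e z : pdeg dec t e = 0%nat -> peval z (pderiv dec t e) = 0.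
Proof.
  induction e; simpl; intros H; auto.
  - destruct (dec i t); [discriminate|reflexivity].
  - rewrite IHe1, IHe2 by lia. ring.
  - destruct (Nat.eqb_spec (pdeg dec t e1) 0), (Nat.eqb_spec (pdeg dec t e2) 0);
      simpl; try lia; ring.
Qed.

(* Mean value theorem in [z_t]: on the segment from [p] to [q], [|d e/d z_t| >= d1 / 2],
   while [e] changes by at most [3 tau]. *)
Lemma small_values_clustered t e tau d1 h c p q :
  vars_in idx e -> 0 < d1 -> 0 <= h ->
  plip e * h <= tau -> plip (pderiv dec t e) * c <= d1 / 2 ->
  in_cube idx p -> in_cube idx q -> In t idx ->
  Rabs (peval p e) <= tau -> Rabs (peval q e) <= tau -> d1 < Rabs (peval p (pderiv dec t e)) ->
  (forall i, In i idx -> i <> t -> Rabs (p i - q i) <= h) -> Rabs (p t - q t) <= c ->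
  Rabs (p t - q t) <= 6 * tau / d1.
Proof.
  intros Ve Hd1 Hh HLh HLc Hp Hq Ht Ep Eq Dp Hpq Hpqt. set (de := pderiv dec t e) in *.
  assert (Vde : vars_in idx de) by (intros i Hi; apply Ve, (occurs_pderiv dec t); auto).
  destruct (peval_MVT dec t e p (p t) (q t)) as [xi [Hxi [Hxi2 Hmvt]]]; [apply Hp; auto|apply Hq; auto|].
  rewrite upd_same in Hmvt. fold de in Hmvt.
  assert (Hde : d1 / 2 <= Rabs (peval (upd dec p t xi) de)).
  { assert (D : Rabs (peval (upd dec p t xi) de - peval p de) <= plip de * Rabs (xi - p t)).
    { apply (plip_correct idx); auto; [apply in_cube_upd; auto|].
      intros i Hi. unfold upd. destruct (dec i t) as [->|]; [lra|].
      rewrite Rminus_diag, Rabs_R0. apply Rabs_pos. }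
    assert (Rabs (xi - p t) <= c) by (rewrite Rabs_minus_sym in Hpqt; lra).
    assert (plip de * Rabs (xi - p t) <= plip de * c)
      by (apply Rmult_le_compat_l; auto; apply plip_nonneg).
    pose proof (Rabs_triang_inv (peval p de) (peval p de - peval (upd dec p t xi) de)).
    replace (peval p de - (peval p de - peval (upd dec p t xi) de))
      with (peval (upd dec p t xi) de) in * by ring.
    rewrite Rabs_minus_sym in D. lra. }
  assert (He : Rabs (peval (upd dec p t (q t)) e - peval p e) <= 3 * tau).
  { assert (D : Rabs (peval (upd dec p t (q t)) e - peval q e) <= plip e * h).
    { apply (plip_correct idx); auto; [apply in_cube_upd; auto|].
      intros i Hi. unfold upd. destruct (dec i t) as [->|]; [|apply Hpq; auto].
      rewrite Rminus_diag, Rabs_R0. exact Hh. }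
    pose proof (Rabs_triang (peval (upd dec p t (q t)) e - peval q e) (peval q e - peval p e)).
    replace (peval (upd dec p t (q t)) e - peval q e + (peval q e - peval p e))
      with (peval (upd dec p t (q t)) e - peval p e) in * by ring.
    pose proof (Rabs_triang (peval q e) (- peval p e)). rewrite Rabs_Ropp in *.
    fold (peval q e - peval p e) in *. lra. }
  rewrite Hmvt, Rabs_mult in He. rewrite Rabs_minus_sym.
  apply (Rmult_le_reg_l (d1 / 2)); [lra|].
  replace (d1 / 2 * (6 * tau / d1)) with (3 * tau) by (field; lra).
  eapply Rle_trans; [|apply He]. apply Rmult_le_compat_r; [apply Rabs_pos|auto].
Qed.

Definition small_values (e : pexpr I) (del : R) (z : I -> R) : Prop :=
  in_cube idx z /\ Rabs (peval z e) <= del.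

Definition small_values_coverable (e : pexpr I) : Prop :=
  forall eps, 0 < eps -> exists del, 0 < del /\ covered_by_boxes idx (small_values e del) eps.

Lemma cover_small_values_large_deriv t e d1 eps : In t idx -> vars_in idx e ->
  0 < d1 -> 0 < eps ->
  exists del, 0 < del /\ covered_by_boxes idx
    (fun z => small_values e del z /\ d1 < Rabs (peval z (pderiv dec t e))) eps.
Proof.
  intros Ht Ve Hd1 He. set (A := 2 ^ length idx). assert (HA : 0 < A) by (apply pow_lt; lra).
  destruct (exists_mesh (plip (pderiv dec t e)) (d1 / 2)) as [K [HK HLc]];
    [apply plip_nonneg|lra|].
  assert (HKp : 0 < INR K) by (apply lt_0_INR; lia).
  set (m := Rmin 1 (eps / (A * INR K))).
  assert (Hm0 : 0 < m)
    by (apply Rmin_pos; [lra|apply Rdiv_lt_0_compat; [lra|apply Rmult_lt_0_compat; lra]]).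
  assert (Hm1 : m <= 1) by apply Rmin_l.
  assert (Hm2 : m <= eps / (A * INR K)) by apply Rmin_r.
  set (tau := d1 * m / 13). assert (Htau : 0 < tau) by (unfold tau; nra).
  destruct (exists_mesh (plip e) tau) as [N [HN HLh]]; [apply plip_nonneg|lra|].
  assert (HNp : 0 < INR N) by (apply lt_0_INR; lia).
  exists tau. split; auto.
  destruct (cover_clustered dec t idx Ht N K (6 * tau / d1)
              (fun z => small_values e tau z /\ d1 < Rabs (peval z (pderiv dec t e))))
    as [bs [W [Vb C]]]; auto.
  - unfold tau. replace (2 * (6 * (d1 * m / 13) / d1)) with (12 * m / 13) by (field; lra). lra.
  - intros z [[Hz _] _]; auto.
  - intros p q [[Hp Ep] Dp] [[Hq Eq] _] Hpq Hpqt.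
    apply (small_values_clustered t e tau d1 (2 / INR N) (2 / INR K)); auto.
    apply Rlt_le, Rdiv_lt_0_compat; lra.
  - exists bs. split; auto. split; auto.
    eapply Rle_lt_trans; [exact Vb|]. fold A. unfold tau.
    replace (A * INR K * (2 * (6 * (d1 * m / 13) / d1))) with (A * INR K * m * (12 / 13))
      by (field; lra).
    assert (A * INR K * m <= eps).
    { replace eps with (A * INR K * (eps / (A * INR K))) by (field; lra).
      apply Rmult_le_compat_l; [apply Rmult_le_pos|]; lra. }
    lra.
Qed.

Lemma small_values_coverable_of_pderiv t e : In t idx -> vars_in idx e ->
  small_values_coverable (pderiv dec t e) -> small_values_coverable e.
Proof.
  intros Ht Ve Hde eps He.
  destruct (Hde (eps / 2)) as [d1 [Hd1 C1]]; [lra|].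
  destruct (cover_small_values_large_deriv t e d1 (eps / 2)) as [del [Hdel C2]]; auto; [lra|].
  exists del. split; auto. replace eps with (eps / 2 + eps / 2) by field.
  eapply covered_by_boxes_sub; [|apply (covered_by_boxes_union _ _ _ _ _ C1 C2)].
  intros z [Hz Hle]. destruct (Rle_dec (Rabs (peval z (pderiv dec t e))) d1).
  - left. split; auto.
  - right. split; [split|]; auto. lra.
Qed.

Lemma peval_psubst_pderiv_vanishing t e z : In t idx -> in_cube idx z ->
  (forall z, in_cube idx z -> peval z (pderiv dec t e) = 0) ->
  peval z (psubst dec t 0 e) = peval z e.
Proof.
  intros Ht Hz Z. rewrite peval_psubst.
  destruct (peval_MVT dec t e z 0 (z t)) as [xi [Hxi [_ Hm]]]; [lra|apply Hz; auto|].
  rewrite upd_same, Z in Hm by (apply in_cube_upd; auto). lra.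
Qed.

Lemma small_values_coverable_of_constant e : vars_in [] e ->
  (exists z0, in_cube idx z0 /\ peval z0 e <> 0) -> small_values_coverable e.
Proof.
  intros Ve [z0 [Hz0 Hne]] eps He. exists (Rabs (peval z0 e) / 2). split.
  - apply Rdiv_lt_0_compat; [apply Rabs_pos_lt; auto|lra].
  - exists []. split; [constructor|]. split; [unfold total_vol; simpl; lra|].
    intros z [Hz Hle]. exfalso. rewrite (peval_ext e z z0) in Hle.
    + pose proof (Rabs_pos_lt _ Hne). lra.
    + intros i Hi. destruct (Ve i Hi).
Qed.

(* Induction on the number of variables, and for the first variable [t] on the degree in
   [t]: either [d e/d z_t] is not identically zero on the cube and has lower degree, or [e]
   does not depend on [z_t] on the cube. *)
Lemma small_values_coverable_of_nonzero n : forall V e, (length V <= n)%nat ->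
  vars_in V e -> (forall i, In i V -> In i idx) ->
  (exists z0, in_cube idx z0 /\ peval z0 e <> 0) -> small_values_coverable e.
Proof.
  induction n as [|n IHn]; intros V e HV Ve HVi Hnz;
    (destruct V as [|t V']; [apply small_values_coverable_of_constant; auto|]);
    [simpl in HV; lia|].
  assert (Ht : In t idx) by (apply HVi; simpl; auto).
  assert (Flat : forall e, vars_in (t :: V') e -> (exists z0, in_cube idx z0 /\ peval z0 e <> 0) ->
            (forall z, in_cube idx z -> peval z (pderiv dec t e) = 0) ->
            small_values_coverable e).
  { intros e1 Ve1 [z0 [Hz0 Hne0]] Z.
    assert (E : forall z, in_cube idx z -> peval z (psubst dec t 0 e1) = peval z e1)
      by (intros; apply peval_psubst_pderiv_vanishing; auto).
    intros eps He. destruct (IHn V' (psubst dec t 0 e1)) with (eps := eps) as [del [Hdel C]];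
      auto; [simpl in HV; lia| | |exists z0; rewrite E; auto|].
    - intros i Hi. apply occurs_psubst in Hi. destruct Hi as [Hi Hit].
      destruct (Ve1 i Hi); [congruence|auto].
    - intros; apply HVi; simpl; auto.
    - exists del. split; auto. eapply covered_by_boxes_sub; [|exact C].
      intros z [Hz Hle]. split; auto. rewrite E; auto. }
  enough (Inner : forall k e, (pdeg dec t e <= k)%nat -> vars_in (t :: V') e ->
           (exists z0, in_cube idx z0 /\ peval z0 e <> 0) -> small_values_coverable e)
    by (apply (Inner (pdeg dec t e)); auto).
  induction k as [|k IHk]; intros e1 Hk Ve1 Hnz1.
  all: destruct (classic (exists z1, in_cube idx z1 /\ peval z1 (pderiv dec t e1) <> 0))
    as [[z1 [Hz1 Hne1]]|Nn];
    [|apply Flat; auto; intros z Hz; apply NNPP; intros Hne; apply Nn; eauto].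
  - exfalso. apply Hne1. apply peval_pderiv_pdeg0. lia.
  - apply (small_values_coverable_of_pderiv t e1 Ht); [intros i Hi; apply HVi, Ve1; auto|].
    apply IHk; [pose proof (pdeg_pderiv dec t e1); lia| |eauto].
    intros i Hi. apply Ve1, (occurs_pderiv dec t); auto.
Qed.

Lemma zero_set_negligible e : vars_in idx e -> (exists z0, in_cube idx z0 /\ peval z0 e <> 0) ->
  negligible idx (fun z => in_cube idx z /\ peval z e = 0).
Proof.
  intros Ve Hnz eps He.
  destruct (small_values_coverable_of_nonzero (length idx) idx e (le_n _) Ve (fun i H => H) Hnz
              eps He) as [del [Hd C]].
  eapply covered_by_boxes_sub; [|exact C].
  intros z [Hz E]. split; auto. rewrite E, Rabs_R0; lra.
Qed.

Lemma zero_sets_negligible (L : list (pexpr I)) :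
  (forall e, In e L -> vars_in idx e /\ exists z0, in_cube idx z0 /\ peval z0 e <> 0) ->
  negligible idx (fun z => in_cube idx z /\ exists e, In e L /\ peval z e = 0).
Proof.
  induction L as [|e L IH]; intros H.
  - apply negligible_empty. intros z [_ [e [[] _]]].
  - eapply negligible_sub;
      [|apply negligible_union; [apply zero_set_negligible; apply H; simpl; auto|
                                 apply IH; intros; apply H; simpl; auto]].
    intros z [Hz [e' [[<-|He] Ee]]]; [left; auto|right; split; eauto].
Qed.

End ZeroSets.

(** * Finite sums and transition matrices *)

Lemma rsum_S n f : rsum (S n) f = rsum n f + f n.
Proof.
  unfold rsum. rewrite seq_S, map_app, fold_right_app. simpl.
  induction (map f (seq 0 n)); simpl; lra.
Qed.

Lemma rsum_Sl n f : rsum (S n) f = f 0%nat + rsum n (fun k => f (S k)).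
Proof. unfold rsum. simpl. f_equal. rewrite <- seq_shift, map_map. reflexivity. Qed.

Lemma rsum_ext n f g : (forall k, (k < n)%nat -> f k = g k) -> rsum n f = rsum n g.
Proof. induction n; intros H; [reflexivity|]. rewrite !rsum_S, IHn, H; auto. Qed.

Lemma rsum_plus n f g : rsum n (fun k => f k + g k) = rsum n f + rsum n g.
Proof. induction n; [unfold rsum; simpl; ring|]. rewrite !rsum_S, IHn. ring. Qed.

Lemma rsum_scal n c f : rsum n (fun k => c * f k) = c * rsum n f.
Proof. induction n; [unfold rsum; simpl; ring|]. rewrite !rsum_S, IHn. ring. Qed.

Lemma rsum_eq0 n f : (forall k, (k < n)%nat -> f k = 0) -> rsum n f = 0.
Proof. induction n; intros H; [reflexivity|]. rewrite rsum_S, IHn, H; auto. ring. Qed.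

Lemma rsum_swap n m f :
  rsum n (fun i => rsum m (fun j => f i j)) = rsum m (fun j => rsum n (fun i => f i j)).
Proof.
  induction n.
  - symmetry. apply rsum_eq0. reflexivity.
  - rewrite rsum_S, IHn, <- rsum_plus. apply rsum_ext. intros; rewrite rsum_S; ring.
Qed.

Definition kron (i j : nat) : R := if Nat.eqb i j then 1 else 0.

Lemma rsum_kron_l n x f : (x < n)%nat -> rsum n (fun x' => kron x x' * f x') = f x.
Proof.
  unfold kron. induction n; intros H; [lia|]. rewrite rsum_S.
  destruct (Nat.eq_dec x n) as [->|Hxn].
  - rewrite Nat.eqb_refl, rsum_eq0; [ring|]. intros k Hk.
    destruct (Nat.eqb_spec n k); [lia|ring].
  - rewrite IHn by lia. destruct (Nat.eqb_spec x n); [lia|ring].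
Qed.

Lemma rsum_kron_r n x f : (x < n)%nat -> rsum n (fun x' => f x' * kron x' x) = f x.
Proof.
  intros H. rewrite <- (rsum_kron_l n x f H). apply rsum_ext. intros k _.
  unfold kron. rewrite (Nat.eqb_sym k x). ring.
Qed.

Lemma rsum_indicator n m : rsum n (fun x => if Nat.eqb x m then 1 else 0) =
  if Nat.ltb m n then 1 else 0.
Proof.
  induction n; [reflexivity|]. rewrite rsum_S, IHn.
  destruct (Nat.ltb_spec m n), (Nat.ltb_spec m (S n)), (Nat.eqb_spec n m); try lia; ring.
Qed.

Lemma rsum_nonneg n f : (forall k, (k < n)%nat -> 0 <= f k) -> 0 <= rsum n f.
Proof.
  induction n; intros H; [unfold rsum; simpl; lra|]. rewrite rsum_S.
  pose proof (H n ltac:(lia)). assert (0 <= rsum n f) by (apply IHn; auto). lra.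
Qed.

Lemma rsum_ge_term n f j : (forall k, (k < n)%nat -> 0 <= f k) -> (j < n)%nat ->
  f j <= rsum n f.
Proof.
  induction n; intros H Hj; [lia|]. rewrite rsum_S.
  assert (0 <= rsum n f) by (apply rsum_nonneg; auto).
  destruct (Nat.eq_dec j n) as [->|]; [lra|].
  assert (f j <= rsum n f) by (apply IHn; auto; lia). pose proof (H n ltac:(lia)). lra.
Qed.

Lemma is_trans_entry_bound d dY W y x x' : is_trans d dY W ->
  (y < dY)%nat -> (x < d)%nat -> (x' < d)%nat -> 0 <= W y x x' <= 1.
Proof.
  intros [H1 H2] Hy Hx Hx'. split; [apply H1; auto|]. rewrite <- (H2 x' Hx').
  apply Rle_trans with (rsum d (fun x => W y x x')).
  - apply (rsum_ge_term d (fun x => W y x x')); auto.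
  - apply (rsum_ge_term dY (fun y => rsum d (fun x => W y x x')) y); auto.
    intros; apply rsum_nonneg; auto.
Qed.

Lemma is_prob_entry_bound d P x : is_prob d P -> (x < d)%nat -> 0 <= P x <= 1.
Proof. intros [H1 H2] Hx. split; auto. rewrite <- H2. apply rsum_ge_term; auto. Qed.

Section WordMatrices.
Variables d dY : nat.

Fixpoint word_mx (W : nat -> nat -> nat -> R) (ys : list nat) : nat -> nat -> R :=
  match ys with
  | [] => kron
  | y :: ys => fun x x' => rsum d (fun k => word_mx W ys x k * W y k x')
  end.

Lemma wordapp_word_mx W ys : forall v x, (x < d)%nat ->
  wordapp d W ys v x = rsum d (fun x' => word_mx W ys x x' * v x').
Proof.
  induction ys as [|y ys IH]; intros v x Hx; simpl.
  - rewrite rsum_kron_l; auto.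
  - rewrite IH by auto. unfold Wapp.
    transitivity (rsum d (fun x' => rsum d (fun x'' => word_mx W ys x x' * (W y x' x'' * v x''))));
      [apply rsum_ext; intros; rewrite <- rsum_scal; reflexivity|].
    rewrite rsum_swap. apply rsum_ext. intros k _.
    rewrite Rmult_comm, <- rsum_scal. apply rsum_ext. intros; ring.
Qed.

Lemma word_mx_ext W1 W2 ys x x' :
  (forall y a b, (y < dY)%nat -> (a < d)%nat -> (b < d)%nat -> W1 y a b = W2 y a b) ->
  word_ok dY ys -> (x' < d)%nat -> word_mx W1 ys x x' = word_mx W2 ys x x'.
Proof.
  intros HW. revert x'. induction ys as [|y ys IH]; intros x' Hok Hx'; simpl; auto.
  inversion Hok; subst. apply rsum_ext. intros k Hk. rewrite IH, HW; auto.
Qed.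

Lemma inK_of_zero W f : (forall x, (x < d)%nat -> f x = 0) -> inK d dY W f.
Proof.
  intros H ys _ _. apply rsum_eq0. intros x Hx. rewrite wordapp_word_mx by auto.
  apply rsum_eq0. intros; rewrite H; auto; ring.
Qed.

Definition test_word (i : nat) : list nat :=
  if Nat.eqb i (d - 1) then [0%nat] else repeat 1%nat (d - 1 - i).

Lemma repeat_word_ok n : (2 <= dY)%nat -> word_ok dY (repeat 1%nat n).
Proof. intros H; unfold word_ok; induction n; simpl; constructor; auto; lia. Qed.

Lemma test_word_ok i : (2 <= dY)%nat -> word_ok dY (test_word i).
Proof.
  intros H. unfold test_word. destruct (Nat.eqb i (d - 1)); [|apply repeat_word_ok; auto].
  constructor; [lia|constructor].
Qed.

Lemma test_word_nonempty i : (i < d)%nat -> test_word i <> [].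
Proof.
  intros H. unfold test_word. destruct (Nat.eqb_spec i (d - 1)); [discriminate|].
  replace (d - 1 - i)%nat with (S (d - 2 - i)) by lia. discriminate.
Qed.

Definition obs_mx W (i j : nat) : R := rsum d (fun x => word_mx W (test_word i) x j).

Lemma obs_mx_inK W v : (2 <= dY)%nat -> inK d dY W v ->
  forall i, (i < d)%nat -> rsum d (fun j => obs_mx W i j * v j) = 0.
Proof.
  intros HdY Hv i Hi.
  rewrite <- (Hv (test_word i) (test_word_nonempty i Hi) (test_word_ok i HdY)).
  unfold obs_mx.
  transitivity (rsum d (fun j => rsum d (fun x => word_mx W (test_word i) x j * v j))).
  - apply rsum_ext; intros; rewrite Rmult_comm, <- rsum_scal; apply rsum_ext; intros; ring.
  - rewrite rsum_swap. apply rsum_ext. intros; rewrite wordapp_word_mx; auto.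
Qed.

Definition krylov_mx W (P : nat -> R) (j i : nat) : R :=
  rsum d (fun x' => word_mx W (repeat 1%nat i) j x' * P x').

Lemma comb_repeat_words W P (c : nat -> R) s x :
  comb d W P (map (fun i => (c i, repeat 1%nat i)) s) x =
  fold_right Rplus 0 (map (fun i => c i * wordapp d W (repeat 1%nat i) P x) s).
Proof. induction s; simpl; auto. unfold comb in *. simpl. rewrite IHs. reflexivity. Qed.

Lemma fullV_of_krylov_span W P : (2 <= dY)%nat ->
  (forall v : nat -> R, exists c : nat -> R,
     forall x, (x < d)%nat -> rsum d (fun i => krylov_mx W P x i * c i) = v x) ->
  fullV d dY W P.
Proof.
  intros HdY H v. destruct (H v) as [c Hc].
  exists (map (fun i => (c i, repeat 1%nat i)) (seq 0 d)). split.
  - apply Forall_forall. intros cw Hcw. apply in_map_iff in Hcw. destruct Hcw as [i [<- _]].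
    apply repeat_word_ok; auto.
  - apply inK_of_zero. intros x Hx. rewrite comb_repeat_words.
    fold (rsum d (fun i => c i * wordapp d W (repeat 1%nat i) P x)).
    rewrite <- (Hc x Hx).
    assert (rsum d (fun i => krylov_mx W P x i * c i) =
            rsum d (fun i => c i * wordapp d W (repeat 1%nat i) P x)).
    { apply rsum_ext. intros i Hi. unfold krylov_mx. rewrite wordapp_word_mx by auto. ring. }
    lra.
Qed.

(** [I + e_0 u^T - |W|]: the stationary distributions of [|W|] are the solutions [P] of
    [stat_mx W P = e_0]. *)
Definition stat_mx W (i j : nat) : R :=
  kron i j + kron i 0 - sumW dY W i j.

Lemma stationary_stat_mx W P : stationary d dY W P -> forall i, (i < d)%nat ->
  rsum d (fun x' => stat_mx W i x' * P x') = kron i 0.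
Proof.
  intros [[_ HP1] HP2] i Hi. unfold stat_mx.
  rewrite (rsum_ext d _ (fun x' => (kron i x' * P x' + kron i 0 * P x') +
                                   (-1) * (sumW dY W i x' * P x')))
    by (intros; ring).
  rewrite !rsum_plus, !rsum_scal, rsum_kron_l, HP1, HP2 by auto. ring.
Qed.

Lemma irreducible_of_pos W :
  (forall x x', (x < d)%nat -> (x' < d)%nat -> 0 < sumW dY W x x') ->
  irreducible d (sumW dY W).
Proof.
  intros H i j Hi Hj. exists 1%nat. simpl.
  rewrite (rsum_ext d _ (fun k => sumW dY W i k * kron k j)) by reflexivity.
  rewrite rsum_kron_r; auto.
Qed.

Section Ext.
Variables (W1 W2 : nat -> nat -> nat -> R).
Hypothesis HW : forall y a b, (y < dY)%nat -> (a < d)%nat -> (b < d)%nat -> W1 y a b = W2 y a b.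
Hypothesis HdY : (2 <= dY)%nat.

Lemma obs_mx_ext i j : (j < d)%nat -> obs_mx W1 i j = obs_mx W2 i j.
Proof. intros Hj. apply rsum_ext. intros x Hx. apply word_mx_ext; auto. apply test_word_ok; auto. Qed.

Lemma krylov_mx_ext P1 P2 j i : (forall x, (x < d)%nat -> P1 x = P2 x) ->
  krylov_mx W1 P1 j i = krylov_mx W2 P2 j i.
Proof.
  intros HP. apply rsum_ext. intros x' Hx'.
  rewrite HP, (word_mx_ext W1 W2); auto. apply repeat_word_ok; auto.
Qed.

Lemma stat_mx_ext i j : (i < d)%nat -> (j < d)%nat -> stat_mx W1 i j = stat_mx W2 i j.
Proof. intros Hi Hj. unfold stat_mx, sumW. rewrite (rsum_ext dY _ (fun y => W2 y i j)); auto. Qed.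

End Ext.

End WordMatrices.

(** * Determinants *)

Module Determinants.
Import all_boot all_algebra all_fingroup Rstruct.
Import GRing.Theory.
Local Open Scope ring_scope.

Definition detn (d : nat) (A : nat -> nat -> R) : R := \det (\matrix_(i < d, j < d) A i j).

Lemma rsum_big n f : rsum n f = \sum_(i < n) f i.
Proof.
  elim: n => [|n IH]; first by rewrite big_ord0.
  by rewrite rsum_S big_ord_recr /= IH.
Qed.

Lemma eqbE (i j : nat) : Nat.eqb i j = (i == j).
Proof. by case: (PeanoNat.Nat.eqb_spec i j) => [->|/eqP/negbTE ->]; rewrite ?eqxx. Qed.

Lemma detn_ext d (A B : nat -> nat -> R) :
  (forall i j, (i < d)%coq_nat -> (j < d)%coq_nat -> A i j = B i j) -> detn d A = detn d B.
Proof. move=> H. congr (\det _). apply/matrixP => i j. rewrite !mxE. apply: H; exact/ltP. Qed.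

Lemma detn_kron d : detn d kron = R1.
Proof.
  rewrite /detn. have -> : \matrix_(i < d, j < d) kron i j = 1%:M.
  { apply/matrixP => i j. rewrite !mxE /kron.
    case: (PeanoNat.Nat.eqb_spec i j) => [/val_inj ->|Hij]; first by rewrite eqxx.
    suff -> : (i == j) = false by [].
    by apply/negbTE/eqP => E; apply: Hij; rewrite E. }
  exact: det1.
Qed.

Lemma detn_unitriangular d (A : nat -> nat -> R) :
  (forall i j, (i < j)%coq_nat -> (j < d)%coq_nat -> A i j = R0) ->
  (forall i, (i < d)%coq_nat -> A i i = R1) -> detn d A = R1.
Proof.
  move=> Hup Hdiag. rewrite /detn det_trig.
  - apply: big1 => i _. rewrite mxE. apply: Hdiag. exact/ltP.
  - apply/forallP => i. apply/forallP => j. apply/implyP => Hij.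
    rewrite mxE Hup //; exact/ltP.
Qed.

Lemma detn_kernel d (A : nat -> nat -> R) (v : nat -> R) : detn d A <> 0 ->
  (forall i, (i < d)%coq_nat -> rsum d (fun j => Rmult (A i j) (v j)) = 0) ->
  forall j, (j < d)%coq_nat -> v j = 0.
Proof.
  move=> /eqP Hdet H j /ltP Hj.
  set M := \matrix_(i < d, j < d) A i j. set vv := \col_(j < d) v j.
  have HM : M \in unitmx by rewrite unitmxE unitfE.
  have Hz : M *m vv = 0.
  { apply/matrixP => i k. rewrite !mxE -[RHS](H i); last exact/ltP.
    rewrite rsum_big. apply: eq_bigr => l _. by rewrite !mxE. }
  have : vv = 0 by rewrite -(mulKmx HM vv) Hz mulmx0.
  move/matrixP => /(_ (Ordinal Hj) 0). by rewrite !mxE.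
Qed.

Lemma detn_span d (A : nat -> nat -> R) : detn d A <> 0 -> forall v : nat -> R,
  exists c : nat -> R, forall x, (x < d)%coq_nat -> rsum d (fun i => Rmult (A x i) (c i)) = v x.
Proof.
  move=> /eqP Hdet v.
  set M := \matrix_(i < d, j < d) A i j. set vv := \col_(j < d) v j.
  have HM : M \in unitmx by rewrite unitmxE unitfE.
  set cc := invmx M *m vv.
  exists (fun i => \sum_(k < d | val k == i) cc k 0) => x /ltP Hx.
  have := mulKVmx HM vv. move/matrixP => /(_ (Ordinal Hx) 0). rewrite !mxE => <-.
  rewrite rsum_big. apply: eq_bigr => i _. rewrite mxE. congr (_ * _).
  by rewrite (eq_bigl (fun k => k == i)) ?big_pred1_eq.
Qed.

(** The numerator of Cramer's rule for the [x']-th unknown of [B P = e_0]. *)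
Definition cramer_num d (B : nat -> nat -> R) (x' : nat) : R :=
  detn d (fun i j => if Nat.eqb j x' then kron i 0 else B i j).

Lemma cramer_num_ext d (B1 B2 : nat -> nat -> R) x' :
  (forall i j, (i < d)%coq_nat -> (j < d)%coq_nat -> B1 i j = B2 i j) ->
  cramer_num d B1 x' = cramer_num d B2 x'.
Proof. move=> H. apply: detn_ext => i j Hi Hj. case: (Nat.eqb j x') => //. exact: H. Qed.

Lemma cramer_rule d (B : nat -> nat -> R) (P : nat -> R) : (0 < d)%coq_nat ->
  detn d B <> 0 ->
  (forall i, (i < d)%coq_nat ->
     rsum d (fun x' => Rmult (B i x') (P x')) = kron i 0) ->
  forall x', (x' < d)%coq_nat -> Rmult (detn d B) (P x') = cramer_num d B x'.
Proof.
  case: d => [/ltP //|d] _ /eqP Hdet H x' /ltP Hx'.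
  set A := \matrix_(i < d.+1, j < d.+1) B i j.
  have HA : A \in unitmx by rewrite unitmxE unitfE.
  set e0 := \col_(i < d.+1) (if i == ord0 then 1 else 0 : R).
  set pp := \col_(j < d.+1) P j.
  set qq := \col_(j < d.+1) cramer_num d.+1 B j.
  have Hq : forall j : 'I_d.+1, cramer_num d.+1 B j = \adj A j ord0.
  { move=> j. rewrite /cramer_num /detn mxE (expand_det_col _ j).
    rewrite (bigD1 ord0) //= big1 ?addr0.
    - rewrite !mxE eqbE eqxx /= /kron /= mul1r /cofactor. congr (_ * \det _).
      apply/matrixP => a b. rewrite !mxE eqbE.
      suff -> : (lift j b == j :> nat) = false by [].
      by apply/negbTE; rewrite (inj_eq val_inj) eq_sym neq_lift.
    - move=> i Hi. rewrite !mxE eqbE eqxx /= /kron eqbE.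
      suff -> : (i == 0%N :> nat) = false by rewrite mul0r.
      exact/negbTE. }
  have E1 : A *m pp = e0.
  { apply/matrixP => i k. rewrite !mxE.
    have := H i (ltP (ltn_ord i)). rewrite rsum_big /kron eqbE => <-.
    apply: eq_bigr => l _. by rewrite !mxE. }
  have E2 : A *m qq = \det A *: e0.
  { apply/matrixP => i k. rewrite !mxE.
    have := mul_mx_adj A. move/matrixP => /(_ i ord0). rewrite !mxE => HH.
    rewrite (eq_bigr (fun l => A i l * \adj A l ord0)); last by move=> l _; rewrite [qq _ _]mxE Hq.
    rewrite HH. by case: (i == ord0); rewrite ?mulr1 ?mulr0. }
  have E3 : A *m (\det A *: pp - qq) = 0 by rewrite mulmxBr -scalemxAr E1 E2 subrr.
  have : \det A *: pp - qq = 0 by rewrite -(mulKmx HA (_ - _)) E3 mulmx0.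
  move/eqP. rewrite subr_eq0 => /eqP /matrixP /(_ (Ordinal Hx') 0). by rewrite !mxE.
Qed.

Lemma cramer_num_kron d x' : (x' < d)%coq_nat ->
  cramer_num d kron x' = kron x' 0.
Proof.
  case: x' => [|x'] Hx'.
  - transitivity (detn d kron); last exact: detn_kron.
    apply: detn_ext => i j _ _. rewrite /kron.
    case: (PeanoNat.Nat.eqb_spec j 0) => [->|//]. by rewrite PeanoNat.Nat.eqb_sym.
  - rewrite /cramer_num /detn -det_tr.
    have Hd0 : (0 < d)%N by apply/ltP; lia.
    have Hx'' : (x'.+1 < d)%N by apply/ltP.
    apply: (determinant_alternate (i1 := Ordinal Hd0) (i2 := Ordinal Hx'')) => // k.
    by rewrite !mxE /= PeanoNat.Nat.eqb_refl.
Qed.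

Lemma fold_Rplus_big {T} (f : T -> R) l : fold_right Rplus 0 (List.map f l) = \sum_(x <- l) f x.
Proof. elim: l => [|a l IH]; by rewrite ?big_nil ?big_cons //= IH. Qed.

Lemma fold_Rmult_big {T} (f : T -> R) l : fold_right Rmult 1 (List.map f l) = \prod_(x <- l) f x.
Proof. elim: l => [|a l IH]; by rewrite ?big_nil ?big_cons //= IH. Qed.

Definition pdet {I : Type} (d : nat) (M : nat -> nat -> pexpr I) : pexpr I :=
  psum_list (List.map (fun s : 'S_d =>
          PMul (PConst ((-1) ^+ s)) (pprod_list (List.map (fun i : 'I_d => M i (s i)) (index_enum 'I_d))))
       (index_enum {perm 'I_d})).

Lemma peval_pdet {I : Type} (z : I -> R) d (M : nat -> nat -> pexpr I) :
  peval z (pdet d M) = detn d (fun i j => peval z (M i j)).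
Proof.
  rewrite /pdet /detn peval_psum_list List.map_map fold_Rplus_big /determinant.
  apply: eq_bigr => s _ /=. rewrite peval_pprod_list List.map_map fold_Rmult_big.
  congr (_ * _). apply: eq_bigr => i _. by rewrite mxE.
Qed.

Lemma vars_in_pdet {I : Type} (idx : list I) d (M : nat -> nat -> pexpr I) :
  (forall i j, (i < d)%coq_nat -> (j < d)%coq_nat -> vars_in idx (M i j)) ->
  vars_in idx (pdet d M).
Proof.
  move=> H. apply: vars_in_psum_list => e /List.in_map_iff [s [<- _]] t [[]|].
  apply: vars_in_pprod_list => e' /List.in_map_iff [i [<- _]].
  apply: H; exact/ltP.
Qed.

End Determinants.

Import Determinants.

Lemma trivK_of_obs_det d dY W : (2 <= dY)%nat -> detn d (obs_mx d W) <> 0 -> trivK d dY W.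
Proof.
  intros HdY Hdet v Hv x Hx. apply (detn_kernel d (obs_mx d W) v Hdet); auto.
  intros i Hi. exact (obs_mx_inK d dY W v HdY Hv i Hi).
Qed.

Lemma fullV_of_krylov_det d dY W P : (2 <= dY)%nat ->
  detn d (krylov_mx d W P) <> 0 -> fullV d dY W P.
Proof. intros HdY Hdet. apply fullV_of_krylov_span; auto. apply detn_span; auto. Qed.

(** By Cramer's rule a stationary [P] is proportional to [cramer_num d (stat_mx dY W)], so
    its Krylov matrix is a nonzero multiple of the one of that vector. *)
Lemma fullV_of_stationary_dets d dY W : (2 <= dY)%nat -> (1 <= d)%nat ->
  detn d (stat_mx dY W) <> 0 ->
  detn d (krylov_mx d W (cramer_num d (stat_mx dY W))) <> 0 ->
  forall P, stationary d dY W P -> fullV d dY W P.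
Proof.
  intros HdY Hd HB HM P HP. apply fullV_of_krylov_span; auto. intros v.
  destruct (detn_span d _ HM v) as [c Hc].
  set (D := detn d (stat_mx dY W)).
  assert (EP : forall x', (x' < d)%nat -> D * P x' = cramer_num d (stat_mx dY W) x').
  { intros x' Hx'. apply cramer_rule; [lia|exact HB| |exact Hx']. apply stationary_stat_mx; auto. }
  exists (fun i => c i * D). intros x Hx. rewrite <- (Hc x Hx).
  apply rsum_ext. intros i Hi. unfold krylov_mx.
  rewrite (rsum_ext d (fun x' => word_mx d W (repeat 1%nat i) x x' * cramer_num d (stat_mx dY W) x')
             (fun x' => D * (word_mx d W (repeat 1%nat i) x x' * P x')))
    by (intros k Hk; rewrite <- EP by auto; ring).
  rewrite rsum_scal. ring.
Qed.

(** * Polynomials in the affine coordinates *)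

Definition psumn {I : Type} (n : nat) (f : nat -> pexpr I) : pexpr I :=
  psum_list (map f (seq 0 n)).

Lemma peval_psumn {I : Type} (z : I -> R) n f : peval z (psumn n f) = rsum n (fun k => peval z (f k)).
Proof. unfold psumn, rsum. rewrite peval_psum_list, map_map. reflexivity. Qed.

Lemma vars_in_psumn {I : Type} (idx : list I) n f :
  (forall k, (k < n)%nat -> vars_in idx (f k)) -> vars_in idx (psumn n f).
Proof.
  intros H. apply vars_in_psum_list. intros e He.
  apply in_map_iff in He. destruct He as [k [<- Hk]]. apply in_seq in Hk. apply H. lia.
Qed.

Section Encoding.
Variables (d dY : nat).
Context {I : Type}.
Variables (vw : nat * nat * nat -> I) (vp : nat -> I).

(* [W_0(0|x')] and [P 0] are not coordinates: they are eliminated through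
   column-stochasticity and total mass 1, as in [W_coords] and [pair_coords]. *)
Definition pW (y x x' : nat) : pexpr I :=
  if (Nat.eqb y 0 && Nat.eqb x 0)%bool then
    PAdd (PConst 1) (PMul (PConst (-1)) (psumn d (fun a => psumn dY (fun b =>
      if (Nat.eqb b 0 && Nat.eqb a 0)%bool then PConst 0 else PVar (vw (b, a, x'))))))
  else PVar (vw (y, x, x')).

Definition pP (x : nat) : pexpr I :=
  if Nat.eqb x 0 then
    PAdd (PConst 1) (PMul (PConst (-1)) (psumn d (fun x' =>
      if Nat.eqb x' 0 then PConst 0 else PVar (vp x'))))
  else PVar (vp x).

Definition W_of (z : I -> R) (y x x' : nat) : R := peval z (pW y x x').
Definition P_of (z : I -> R) (x : nat) : R := peval z (pP x).

Fixpoint pword_mx (ys : list nat) : nat -> nat -> pexpr I :=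
  match ys with
  | [] => fun x x' => PConst (kron x x')
  | y :: ys => fun x x' => psumn d (fun k => PMul (pword_mx ys x k) (pW y k x'))
  end.

Lemma peval_pword_mx z ys x x' : peval z (pword_mx ys x x') = word_mx d (W_of z) ys x x'.
Proof.
  revert x'. induction ys as [|y ys IH]; intros x'; simpl; auto.
  rewrite peval_psumn. apply rsum_ext. intros k _. simpl. rewrite IH. reflexivity.
Qed.

Definition pkrylov_mx (pP : nat -> pexpr I) (j i : nat) : pexpr I :=
  psumn d (fun x' => PMul (pword_mx (repeat 1%nat i) j x') (pP x')).

Lemma peval_pkrylov_mx z pP (P : nat -> R) j i :
  (forall x', (x' < d)%nat -> peval z (pP x') = P x') ->
  peval z (pkrylov_mx pP j i) = krylov_mx d (W_of z) P j i.
Proof.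
  intros HP. unfold pkrylov_mx, krylov_mx. rewrite peval_psumn. apply rsum_ext.
  intros k Hk. simpl. rewrite peval_pword_mx, HP; auto.
Qed.

Definition psumW (x x' : nat) : pexpr I := psumn dY (fun y => pW y x x').

Lemma peval_psumW z x x' : peval z (psumW x x') = sumW dY (W_of z) x x'.
Proof. unfold psumW, sumW. rewrite peval_psumn. reflexivity. Qed.

Definition pstat_mx (i j : nat) : pexpr I :=
  PAdd (PConst (kron i j + kron i 0)) (PMul (PConst (-1)) (psumW i j)).

Lemma peval_pstat_mx z i j : peval z (pstat_mx i j) = stat_mx dY (W_of z) i j.
Proof. unfold pstat_mx, stat_mx. simpl. rewrite peval_psumW. ring. Qed.

Definition pcramer_num (x' : nat) : pexpr I :=
  pdet d (fun i j => if Nat.eqb j x' then PConst (kron i 0) else pstat_mx i j).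

Lemma peval_pcramer_num z x' : peval z (pcramer_num x') = cramer_num d (stat_mx dY (W_of z)) x'.
Proof.
  unfold pcramer_num, cramer_num. rewrite peval_pdet. apply detn_ext. intros i j _ _.
  destruct (Nat.eqb j x'); [reflexivity|apply peval_pstat_mx].
Qed.

Definition pobs_det : pexpr I :=
  pdet d (fun i j => psumn d (fun x => pword_mx (test_word d i) x j)).
Definition pkrylov_det : pexpr I := pdet d (pkrylov_mx pP).
Definition pstat_det : pexpr I := pdet d pstat_mx.
Definition pstat_krylov_det : pexpr I := pdet d (pkrylov_mx pcramer_num).

Lemma peval_pobs_det z : peval z pobs_det = detn d (obs_mx d (W_of z)).
Proof.
  unfold pobs_det. rewrite peval_pdet. apply detn_ext. intros i j _ _.
  unfold obs_mx. rewrite peval_psumn. apply rsum_ext. intros; apply peval_pword_mx.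
Qed.

Lemma peval_pkrylov_det z : peval z pkrylov_det = detn d (krylov_mx d (W_of z) (P_of z)).
Proof.
  unfold pkrylov_det. rewrite peval_pdet. apply detn_ext. intros.
  apply peval_pkrylov_mx. reflexivity.
Qed.

Lemma peval_pstat_det z : peval z pstat_det = detn d (stat_mx dY (W_of z)).
Proof. unfold pstat_det. rewrite peval_pdet. apply detn_ext. intros; apply peval_pstat_mx. Qed.

Lemma peval_pstat_krylov_det z : peval z pstat_krylov_det =
  detn d (krylov_mx d (W_of z) (cramer_num d (stat_mx dY (W_of z)))).
Proof.
  unfold pstat_krylov_det. rewrite peval_pdet. apply detn_ext. intros.
  apply peval_pkrylov_mx. intros; apply peval_pcramer_num.
Qed.

Variable idx : list I.
Hypothesis Hw : forall y x x', (y < dY)%nat -> (x < d)%nat -> (x' < d)%nat ->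
  ~ (y = 0%nat /\ x = 0%nat) -> In (vw (y, x, x')) idx.
Hypothesis Hp : forall x, (1 <= x)%nat -> (x < d)%nat -> In (vp x) idx.

Lemma vars_in_pW y x x' : (y < dY)%nat -> (x < d)%nat -> (x' < d)%nat -> vars_in idx (pW y x x').
Proof.
  intros Hy Hx Hx'. unfold pW.
  destruct (Nat.eqb_spec y 0) as [->|], (Nat.eqb_spec x 0) as [->|]; simpl;
    try (intros i <-; apply Hw; auto; lia).
  intros i [[]|[[]|Hi]]. revert i Hi. apply vars_in_psumn. intros a Ha.
  apply vars_in_psumn. intros b Hb.
  destruct (Nat.eqb_spec b 0), (Nat.eqb_spec a 0); simpl; intros i Hi; simpl in Hi;
    try contradiction; subst; apply Hw; auto; lia.
Qed.

Lemma vars_in_pword_mx ys x x' : word_ok dY ys -> (x' < d)%nat -> vars_in idx (pword_mx ys x x').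
Proof.
  revert x'. induction ys as [|y ys IH]; intros x' Hok Hx' i Hi; simpl in Hi; [contradiction|].
  inversion Hok; subst. revert i Hi. apply vars_in_psumn. intros k Hk i [Hi|Hi].
  - exact (IH k H2 Hk i Hi).
  - exact (vars_in_pW y k x' H1 Hk Hx' i Hi).
Qed.

Lemma vars_in_pP x : (x < d)%nat -> vars_in idx (pP x).
Proof.
  intros Hx. unfold pP. destruct (Nat.eqb_spec x 0) as [->|]; simpl;
    [|intros i <-; apply Hp; lia].
  intros i [[]|[[]|Hi]]. revert i Hi. apply vars_in_psumn. intros k Hk.
  destruct (Nat.eqb_spec k 0); simpl; intros i Hi; simpl in Hi; [contradiction|].
  subst; apply Hp; lia.
Qed.

Lemma vars_in_pkrylov_mx pQ j i : (2 <= dY)%nat ->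
  (forall x', (x' < d)%nat -> vars_in idx (pQ x')) -> vars_in idx (pkrylov_mx pQ j i).
Proof.
  intros HdY HQ. apply vars_in_psumn. intros k Hk t [Ht|Ht].
  - exact (vars_in_pword_mx _ j k (repeat_word_ok dY i HdY) Hk t Ht).
  - exact (HQ k Hk t Ht).
Qed.

Lemma vars_in_psumW x x' : (x < d)%nat -> (x' < d)%nat -> vars_in idx (psumW x x').
Proof. intros Hx Hx'. apply vars_in_psumn. intros y Hy. apply vars_in_pW; auto. Qed.

Lemma vars_in_pstat_mx i j : (i < d)%nat -> (j < d)%nat -> vars_in idx (pstat_mx i j).
Proof. intros Hi Hj t [[]|[[]|Ht]]. exact (vars_in_psumW i j Hi Hj t Ht). Qed.

Lemma vars_in_pobs_det : (2 <= dY)%nat -> vars_in idx pobs_det.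
Proof.
  intros HdY. apply vars_in_pdet. intros i j Hi Hj. apply vars_in_psumn. intros x Hx.
  apply vars_in_pword_mx; auto. apply test_word_ok; auto.
Qed.

Lemma vars_in_pkrylov_det : (2 <= dY)%nat -> vars_in idx pkrylov_det.
Proof.
  intros HdY. apply vars_in_pdet. intros; apply vars_in_pkrylov_mx; auto. apply vars_in_pP.
Qed.

Lemma vars_in_pstat_det : vars_in idx pstat_det.
Proof. apply vars_in_pdet. intros; apply vars_in_pstat_mx; auto. Qed.

Lemma vars_in_pstat_krylov_det : (2 <= dY)%nat -> vars_in idx pstat_krylov_det.
Proof.
  intros HdY. apply vars_in_pdet. intros; apply vars_in_pkrylov_mx; auto.
  intros x' Hx'. apply vars_in_pdet. intros a b Ha Hb.
  destruct (Nat.eqb b x'); [intros t []|apply vars_in_pstat_mx; auto].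
Qed.

End Encoding.

Section Agreement.
Variables (d dY : nat).
Hypotheses (Hd : (1 <= d)%nat) (HdY : (2 <= dY)%nat).
Context {I : Type}.
Variables (vw : nat * nat * nat -> I) (vp : nat -> I) (z : I -> R) (W : nat -> nat -> nat -> R).
Hypothesis HT : is_trans d dY W.
Hypothesis Hz : forall y x x', (y < dY)%nat -> (x < d)%nat -> (x' < d)%nat ->
  ~ (y = 0%nat /\ x = 0%nat) -> z (vw (y, x, x')) = W y x x'.

Lemma W_of_agree y x x' : (y < dY)%nat -> (x < d)%nat -> (x' < d)%nat ->
  W_of d dY vw z y x x' = W y x x'.
Proof.
  intros Hy Hx Hx'. unfold W_of, pW.
  destruct (Nat.eqb_spec y 0) as [->|Hy0], (Nat.eqb_spec x 0) as [->|Hx0]; simpl;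
    try (apply Hz; auto; lia).
  rewrite peval_psumn.
  assert (E : rsum d (fun a => rsum dY (fun b => W b a x')) = W 0%nat 0%nat x' +
     rsum d (fun a => peval z (psumn dY (fun b => if (Nat.eqb b 0 && Nat.eqb a 0)%bool
                                                  then PConst 0 else PVar (vw (b, a, x')))))).
  { rewrite (rsum_ext d _ (fun a => (if Nat.eqb a 0 then W 0%nat 0%nat x' else 0) +
      peval z (psumn dY (fun b => if (Nat.eqb b 0 && Nat.eqb a 0)%bool
                                   then PConst 0 else PVar (vw (b, a, x')))))).
    - rewrite rsum_plus. f_equal. destruct d as [|d']; [lia|].
      rewrite rsum_Sl, rsum_eq0; [simpl; ring|reflexivity].
    - intros a Ha. rewrite peval_psumn. destruct dY as [|m]; [lia|]. rewrite !rsum_Sl.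
      destruct (Nat.eqb_spec a 0) as [->|Ha0]; simpl; rewrite Rplus_0_l;
        [|rewrite Hz by lia]; f_equal; apply rsum_ext; intros k Hk; symmetry; apply Hz; lia. }
  destruct HT as [_ Hcol]. rewrite <- rsum_swap, Hcol in E by auto. lra.
Qed.

Lemma P_of_agree P : is_prob d P -> (forall x, (1 <= x)%nat -> (x < d)%nat -> z (vp x) = P x) ->
  forall x, (x < d)%nat -> P_of d vp z x = P x.
Proof.
  intros [_ HP] Hzp x Hx. unfold P_of, pP.
  destruct (Nat.eqb_spec x 0) as [->|]; simpl; [|apply Hzp; lia].
  rewrite peval_psumn. destruct d as [|d']; [lia|]. rewrite rsum_Sl in *. simpl.
  rewrite (rsum_ext d' _ (fun k => P (S k))) by (intros; apply Hzp; lia). lra.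
Qed.

Lemma trivK_of_pobs_det : peval z (pobs_det d dY vw) <> 0 -> trivK d dY W.
Proof.
  rewrite peval_pobs_det. intros H. apply trivK_of_obs_det; auto.
  rewrite <- (detn_ext d _ _ (fun i j _ Hj => obs_mx_ext d dY _ _ W_of_agree HdY i j Hj)); auto.
Qed.

Lemma fullV_of_pkrylov_det P : is_prob d P ->
  (forall x, (1 <= x)%nat -> (x < d)%nat -> z (vp x) = P x) ->
  peval z (pkrylov_det d dY vw vp) <> 0 -> fullV d dY W P.
Proof.
  intros HP Hzp. rewrite peval_pkrylov_det. intros H. apply fullV_of_krylov_det; auto.
  rewrite <- (detn_ext d _ _ (fun j i _ _ =>
    krylov_mx_ext d dY _ _ W_of_agree HdY _ _ j i (P_of_agree P HP Hzp))); auto.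
Qed.

Lemma irreducible_of_psumW :
  (forall x x', (x < d)%nat -> (x' < d)%nat -> peval z (psumW d dY vw x x') <> 0) ->
  irreducible d (sumW dY W).
Proof.
  intros H. apply irreducible_of_pos. intros x x' Hx Hx'.
  specialize (H x x' Hx Hx'). rewrite peval_psumW in H.
  replace (sumW dY (W_of d dY vw z) x x') with (sumW dY W x x') in H
    by (apply rsum_ext; intros; symmetry; apply W_of_agree; auto).
  destruct (Rle_lt_or_eq_dec 0 (sumW dY W x x')) as [|E]; auto; [|congruence].
  apply rsum_nonneg. intros y Hy. apply (proj1 HT); auto.
Qed.

Lemma stationary_fullV_of_pdets : peval z (pstat_det d dY vw) <> 0 ->
  peval z (pstat_krylov_det d dY vw) <> 0 ->
  forall P, stationary d dY W P -> fullV d dY W P.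
Proof.
  rewrite peval_pstat_det, peval_pstat_krylov_det. intros HB HM.
  assert (EB : forall i j, (i < d)%nat -> (j < d)%nat ->
                 stat_mx dY (W_of d dY vw z) i j = stat_mx dY W i j)
    by (intros; apply (stat_mx_ext d); auto; intros; apply W_of_agree; auto).
  apply fullV_of_stationary_dets; auto.
  - rewrite <- (detn_ext d _ _ EB). exact HB.
  - rewrite <- (detn_ext d _ _ (fun j i _ _ =>
      krylov_mx_ext d dY _ _ W_of_agree HdY _ _ j i (fun x' _ => cramer_num_ext d _ _ x' EB))).
    exact HM.
Qed.

End Agreement.

(** * A point where none of the polynomials vanishes *)

(** [W_1] is the shift [S : e_x' |-> e_(x'+1)], [W_0 = e_0 u^T - S] and [W_y = 0] for
    [y >= 2]. Then [|W| = e_0 u^T], [W_1^i e_0 = e_i], the observability matrix is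
    unitriangular and [stat_mx] is the identity; this matrix is not a transition matrix, but
    it lies in the cube. *)
Definition shift_witness (y x x' : nat) : R :=
  if Nat.eqb y 0 then (if Nat.eqb x 0 then 1 else - (if Nat.eqb x (S x') then 1 else 0))
  else if Nat.eqb y 1 then (if Nat.eqb x (S x') then 1 else 0) else 0.

Lemma shift_witness_bound y x x' : -1 <= shift_witness y x x' <= 1.
Proof.
  unfold shift_witness.
  destruct (Nat.eqb y 0), (Nat.eqb x 0), (Nat.eqb y 1), (Nat.eqb x (S x')); lra.
Qed.

Section Witness.
Variables (d dY : nat).
Hypotheses (Hd : (1 <= d)%nat) (HdY : (2 <= dY)%nat).

Lemma W_of_shift_witness {I : Type} (vw : nat * nat * nat -> I) (z : I -> R) :
  (forall t, z (vw t) = W_coords shift_witness t) -> W_of d dY vw z = shift_witness.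
Proof.
  intros Hz. do 3 (apply functional_extensionality; intros ?). rename x into y, x0 into x, x1 into x'.
  unfold W_of, pW.
  destruct (Nat.eqb_spec y 0) as [->|], (Nat.eqb_spec x 0) as [->|]; simpl;
    rewrite ?Hz; try reflexivity.
  rewrite peval_psumn, rsum_eq0; [unfold shift_witness; simpl; ring|]. intros a _. rewrite peval_psumn.
  destruct dY as [|[|m]]; [lia|lia|]. rewrite !rsum_Sl, rsum_eq0.
  - simpl. destruct (Nat.eqb_spec a 0); simpl; rewrite ?Hz; unfold W_coords, shift_witness;
      simpl; repeat match goal with |- context [Nat.eqb ?u ?v] => destruct (Nat.eqb_spec u v) end;
      try lia; ring.
  - intros k _. simpl. rewrite Hz. reflexivity.
Qed.

Lemma word_mx_shift_witness i x x' : (x < d)%nat -> (x' < d)%nat ->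
  word_mx d shift_witness (repeat 1%nat i) x x' = kron x (x' + i).
Proof.
  revert x'. induction i as [|i IH]; intros x' Hx Hx'; simpl.
  - rewrite Nat.add_0_r. reflexivity.
  - transitivity (rsum d (fun k => kron x (k + i) * kron k (S x'))).
    + apply rsum_ext. intros k Hk. rewrite IH by auto. reflexivity.
    + destruct (Nat.ltb_spec (S x') d).
      * rewrite (rsum_kron_r d (S x') (fun k => kron x (k + i))) by auto.
        replace (S x' + i)%nat with (x' + S i)%nat by lia. reflexivity.
      * rewrite rsum_eq0.
        -- unfold kron. destruct (Nat.eqb_spec x (x' + S i)); [lia|reflexivity].
        -- intros k Hk. unfold kron. destruct (Nat.eqb_spec k (S x')); [lia|ring].
Qed.

Lemma detn_obs_mx_shift_witness : detn d (obs_mx d shift_witness) = 1.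
Proof.
  assert (Hrep : forall i j, (i < d - 1)%nat -> (j < d)%nat ->
            obs_mx d shift_witness i j = if Nat.ltb (j + (d - 1 - i)) d then 1 else 0).
  { intros i j Hi Hj. unfold obs_mx, test_word.
    destruct (Nat.eqb_spec i (d - 1)); [lia|].
    rewrite <- rsum_indicator. apply rsum_ext. intros x Hx. apply word_mx_shift_witness; auto. }
  apply detn_unitriangular.
  - intros i j Hij Hj. destruct (Nat.lt_ge_cases i (d - 1)) as [Hi|Hi].
    + rewrite Hrep by lia. destruct (Nat.ltb_spec (j + (d - 1 - i)) d); [lia|reflexivity].
    + lia.
  - intros i Hi. destruct (Nat.lt_ge_cases i (d - 1)) as [Hi'|Hi'].
    + rewrite Hrep by lia. destruct (Nat.ltb_spec (i + (d - 1 - i)) d); [reflexivity|lia].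
    + unfold obs_mx, test_word. destruct (Nat.eqb_spec i (d - 1)); [|lia]. simpl.
      rewrite (rsum_ext d _ (fun x => shift_witness 0 x i))
        by (intros x Hx; apply (rsum_kron_l d x (fun k => shift_witness 0 k i)); auto).
      destruct d as [|d']; [lia|]. rewrite rsum_Sl, rsum_eq0.
      * unfold shift_witness; simpl; ring.
      * intros k Hk. unfold shift_witness; simpl. destruct (Nat.eqb_spec k i); [lia|ring].
Qed.

Lemma detn_krylov_mx_shift_witness P : (forall x, (x < d)%nat -> P x = kron x 0) ->
  detn d (krylov_mx d shift_witness P) = 1.
Proof.
  intros HP. transitivity (detn d kron); [|apply detn_kron].
  apply detn_ext. intros j i Hj Hi. unfold krylov_mx.
  rewrite (rsum_ext d _ (fun x' => kron j (x' + i) * kron x' 0))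
    by (intros x Hx; rewrite word_mx_shift_witness, HP; auto).
  rewrite (rsum_kron_r d 0 (fun x' => kron j (x' + i))) by lia.
  reflexivity.
Qed.

Lemma sumW_shift_witness i j : sumW dY shift_witness i j = kron i 0.
Proof.
  unfold sumW, kron. destruct dY as [|[|m]]; [lia|lia|].
  rewrite !rsum_Sl, rsum_eq0 by reflexivity. unfold shift_witness; simpl.
  destruct (Nat.eqb_spec i 0) as [->|]; simpl; [ring|]. destruct (Nat.eqb i (S j)); ring.
Qed.

Lemma stat_mx_shift_witness i j : stat_mx dY shift_witness i j = kron i j.
Proof. unfold stat_mx. rewrite sumW_shift_witness. ring. Qed.

Lemma cramer_num_stat_mx_shift_witness x' : (x' < d)%nat ->
  cramer_num d (stat_mx dY shift_witness) x' = kron x' 0.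
Proof.
  intros Hx'. rewrite (cramer_num_ext d _ kron x' (fun i j _ _ => stat_mx_shift_witness i j)).
  apply cramer_num_kron; auto.
Qed.

Section Point.
Context {I : Type}.
Variables (vw : nat * nat * nat -> I) (vp : nat -> I) (z : I -> R).
Hypothesis Hzw : forall t, z (vw t) = W_coords shift_witness t.

Lemma pobs_det_witness : peval z (pobs_det d dY vw) = 1.
Proof. rewrite peval_pobs_det, W_of_shift_witness by auto. apply detn_obs_mx_shift_witness. Qed.

Lemma pkrylov_det_witness : (forall x, z (vp x) = 0) -> peval z (pkrylov_det d dY vw vp) = 1.
Proof.
  intros Hzp. rewrite peval_pkrylov_det, W_of_shift_witness by auto.
  apply detn_krylov_mx_shift_witness. intros x _. unfold P_of, pP, kron.
  destruct (Nat.eqb x 0); simpl; [|apply Hzp].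
  rewrite peval_psumn, rsum_eq0; [ring|]. intros k _. destruct (Nat.eqb k 0); simpl; auto.
Qed.

Lemma pstat_det_witness : peval z (pstat_det d dY vw) = 1.
Proof.
  rewrite peval_pstat_det, W_of_shift_witness by auto.
  transitivity (detn d kron); [|apply detn_kron]. apply detn_ext.
  intros; apply stat_mx_shift_witness.
Qed.

Lemma pstat_krylov_det_witness : peval z (pstat_krylov_det d dY vw) = 1.
Proof.
  rewrite peval_pstat_krylov_det, W_of_shift_witness by auto.
  apply detn_krylov_mx_shift_witness. intros; apply cramer_num_stat_mx_shift_witness; auto.
Qed.

Lemma psumW_witness x' : peval z (psumW d dY vw 0 x') = 1.
Proof. rewrite peval_psumW, W_of_shift_witness, sumW_shift_witness by auto. reflexivity. Qed.

End Point.

(** Covers the rows [x >= 1] of [|W|], where [shift_witness] has zeros. *)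
Definition letter0_witness (y x x' : nat) : R := kron y 0.

Lemma psumW_letter0_witness {I : Type} (vw : nat * nat * nat -> I) (z : I -> R) x x' :
  (forall t, z (vw t) = W_coords letter0_witness t) -> (1 <= x)%nat ->
  peval z (psumW d dY vw x x') = 1.
Proof.
  intros Hz Hx. rewrite peval_psumW. unfold sumW, W_of, pW.
  destruct dY as [|m]; [lia|]. rewrite rsum_Sl, rsum_eq0.
  - destruct (Nat.eqb_spec x 0); [lia|]. simpl. rewrite Hz.
    unfold W_coords, letter0_witness, kron. simpl. ring.
  - intros k _. simpl. rewrite Hz. reflexivity.
Qed.

End Witness.

(** * Almost every pair, almost every transition matrix *)

Definition coord_eq_dec : forall x y : nat * nat * nat, {x = y} + {x <> y}.
Proof. decide equality; [apply Nat.eq_dec|]. decide equality; apply Nat.eq_dec. Defined.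

Definition pair_coord_eq_dec : forall x y : (nat * nat * nat) + nat, {x = y} + {x <> y}.
Proof. decide equality; [apply coord_eq_dec|apply Nat.eq_dec]. Defined.

Lemma In_W_idx d dY y x x' : (y < dY)%nat -> (x < d)%nat -> (x' < d)%nat ->
  ~ (y = 0%nat /\ x = 0%nat) -> In (y, x, x') (W_idx d dY).
Proof.
  intros Hy Hx Hx' Hn. unfold W_idx.
  apply in_flat_map. exists y. split; [apply in_seq; lia|].
  apply in_flat_map. exists x. split; [apply in_seq; lia|].
  apply in_flat_map. exists x'. split; [apply in_seq; lia|].
  destruct (Nat.eqb_spec y 0), (Nat.eqb_spec x 0); simpl; tauto.
Qed.

Lemma W_idx_inv d dY t : In t (W_idx d dY) -> exists y x x', t = (y, x, x') /\
  (y < dY)%nat /\ (x < d)%nat /\ (x' < d)%nat.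
Proof.
  unfold W_idx. intros H. apply in_flat_map in H. destruct H as [y [Hy H]].
  apply in_flat_map in H. destruct H as [x [Hx H]].
  apply in_flat_map in H. destruct H as [x' [Hx' H]]. apply in_seq in Hy, Hx, Hx'.
  exists y, x, x'. destruct (Nat.eqb y 0 && Nat.eqb x 0)%bool; simpl in H; [contradiction|].
  destruct H as [<-|[]]. repeat split; lia.
Qed.

Lemma In_pair_idx_W d dY y x x' : (y < dY)%nat -> (x < d)%nat -> (x' < d)%nat ->
  ~ (y = 0%nat /\ x = 0%nat) -> In (inl (y, x, x')) (pair_idx d dY).
Proof. intros. apply in_or_app. left. apply in_map. apply In_W_idx; auto. Qed.

Lemma In_pair_idx_P d dY x : (1 <= x)%nat -> (x < d)%nat ->
  In (@inr (nat * nat * nat) nat x) (pair_idx d dY).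
Proof. intros. apply in_or_app. right. apply in_map. unfold P_idx. apply in_seq. lia. Qed.

Section Main.
Variables d dY : nat.
Hypotheses (Hd : (1 <= d)%nat) (HdY : (2 <= dY)%nat).

Lemma W_coords_in_cube W : is_trans d dY W -> in_cube (W_idx d dY) (W_coords W).
Proof.
  intros HT t Ht. destruct (W_idx_inv d dY t Ht) as [y [x [x' [-> [Hy [Hx Hx']]]]]].
  pose proof (is_trans_entry_bound d dY W y x x' HT Hy Hx Hx'). simpl. lra.
Qed.

Lemma pair_coords_in_cube W P : is_trans d dY W -> is_prob d P ->
  in_cube (pair_idx d dY) (pair_coords W P).
Proof.
  intros HT HP t Ht. apply in_app_or in Ht. destruct Ht as [Ht|Ht];
    apply in_map_iff in Ht; destruct Ht as [t' [<- Ht']]; simpl.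
  - apply (W_coords_in_cube W HT t' Ht').
  - unfold P_idx in Ht'. apply in_seq in Ht'.
    pose proof (is_prob_entry_bound d P t' HP ltac:(lia)). lra.
Qed.

Definition pair_polys : list (pexpr ((nat * nat * nat) + nat)) :=
  [pobs_det d dY inl; pkrylov_det d dY inl inr].

Lemma bad_pair_in_zero_sets z : (exists W P, is_trans d dY W /\ is_prob d P /\
    agree (pair_idx d dY) z (pair_coords W P) /\ ~ (trivK d dY W /\ fullV d dY W P)) ->
  in_cube (pair_idx d dY) z /\ exists e, In e pair_polys /\ peval z e = 0.
Proof.
  intros [W [P [HT [HP [Hag Hn]]]]].
  assert (Hzw : forall y x x', (y < dY)%nat -> (x < d)%nat -> (x' < d)%nat ->
            ~ (y = 0%nat /\ x = 0%nat) -> z (inl (y, x, x')) = W y x x')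
    by (intros; apply Hag, In_pair_idx_W; auto).
  assert (Hzp : forall x, (1 <= x)%nat -> (x < d)%nat -> z (inr x) = P x)
    by (intros; apply Hag, In_pair_idx_P; auto).
  split.
  - intros t Ht. rewrite (Hag t Ht). apply pair_coords_in_cube; auto.
  - apply NNPP. intros Hne. apply Hn. split.
    + apply (trivK_of_pobs_det d dY Hd HdY inl z W HT Hzw).
      intros E. apply Hne. exists (pobs_det d dY inl). simpl; auto.
    + apply (fullV_of_pkrylov_det d dY Hd HdY inl inr z W HT Hzw P HP Hzp).
      intros E. apply Hne. exists (pkrylov_det d dY inl inr). simpl; auto.
Qed.

Lemma pair_polys_nondegenerate e : In e pair_polys ->
  vars_in (pair_idx d dY) e /\ exists z0, in_cube (pair_idx d dY) z0 /\ peval z0 e <> 0.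
Proof.
  set (z0 := fun t : (nat * nat * nat) + nat =>
               match t with inl t => W_coords shift_witness t | inr _ => 0 end).
  assert (Hz0 : in_cube (pair_idx d dY) z0)
    by (intros [[[y x] x']|x] _; simpl; [apply shift_witness_bound|lra]).
  assert (Hw := In_pair_idx_W d dY). assert (Hp := In_pair_idx_P d dY).
  intros [<-|[<-|[]]]; split.
  - apply vars_in_pobs_det; auto.
  - exists z0. split; auto. rewrite pobs_det_witness by (assumption || reflexivity). lra.
  - apply vars_in_pkrylov_det; auto.
  - exists z0. split; auto. rewrite pkrylov_det_witness by (assumption || reflexivity). lra.
Qed.

Definition matrix_polys : list (pexpr (nat * nat * nat)) :=
  [pobs_det d dY Datatypes.id; pstat_det d dY Datatypes.id; pstat_krylov_det d dY Datatypes.id] ++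
  map (fun p => psumW d dY Datatypes.id (fst p) (snd p)) (list_prod (seq 0 d) (seq 0 d)).

Lemma bad_matrix_in_zero_sets z : (exists W, is_trans d dY W /\
    agree (W_idx d dY) z (W_coords W) /\
    ~ (irreducible d (sumW dY W) /\ trivK d dY W /\
       forall P, stationary d dY W P -> fullV d dY W P)) ->
  in_cube (W_idx d dY) z /\ exists e, In e matrix_polys /\ peval z e = 0.
Proof.
  intros [W [HT [Hag Hn]]].
  assert (Hzw : forall y x x', (y < dY)%nat -> (x < d)%nat -> (x' < d)%nat ->
            ~ (y = 0%nat /\ x = 0%nat) -> z (Datatypes.id (y, x, x')) = W y x x')
    by (intros; apply Hag, In_W_idx; auto).
  split.
  - intros t Ht. rewrite (Hag t Ht). apply W_coords_in_cube; auto.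
  - apply NNPP. intros Hne.
    assert (NZ : forall e, In e matrix_polys -> peval z e <> 0) by (intros e He E; eauto).
    apply Hn. split; [|split].
    + apply (irreducible_of_psumW d dY Hd HdY Datatypes.id z W HT Hzw). intros x x' Hx Hx'. apply NZ.
      apply in_or_app. right. apply in_map_iff. exists (x, x'). split; auto.
      apply in_prod; apply in_seq; lia.
    + apply (trivK_of_pobs_det d dY Hd HdY Datatypes.id z W HT Hzw). apply NZ. simpl; auto.
    + apply (stationary_fullV_of_pdets d dY Hd HdY Datatypes.id z W HT Hzw); apply NZ; simpl; auto.
Qed.

Lemma matrix_polys_nondegenerate e : In e matrix_polys ->
  vars_in (W_idx d dY) e /\ exists z0, in_cube (W_idx d dY) z0 /\ peval z0 e <> 0.
Proof.
  assert (Hw := In_W_idx d dY).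
  assert (Hz0 : in_cube (W_idx d dY) (W_coords shift_witness))
    by (intros [[y x] x'] _; apply shift_witness_bound).
  intros He. apply in_app_or in He. destruct He as [[<-|[<-|[<-|[]]]]|He]; [split..|].
  - apply vars_in_pobs_det; auto.
  - exists (W_coords shift_witness). split; auto. rewrite pobs_det_witness by (assumption || reflexivity). lra.
  - apply vars_in_pstat_det; auto.
  - exists (W_coords shift_witness). split; auto. rewrite pstat_det_witness by (assumption || reflexivity). lra.
  - apply vars_in_pstat_krylov_det; auto.
  - exists (W_coords shift_witness). split; auto. rewrite pstat_krylov_det_witness by (assumption || reflexivity). lra.
  - apply in_map_iff in He. destruct He as [[x x'] [<- Hxx]].
    apply in_prod_iff in Hxx. destruct Hxx as [Hx Hx']. apply in_seq in Hx, Hx'. simpl.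
    split; [apply vars_in_psumW; auto; lia|].
    destruct (Nat.eq_dec x 0) as [->|Hx0].
    + exists (W_coords shift_witness). split; auto. rewrite psumW_witness by (assumption || reflexivity). lra.
    + exists (W_coords letter0_witness). split.
      * intros [[y x1] x2] _. unfold W_coords, letter0_witness, kron.
        destruct (Nat.eqb y 0); lra.
      * rewrite psumW_letter0_witness by (reflexivity || lia). lra.
Qed.

End Main.

Theorem lemma5 (d dY : nat) (Hd : (1 <= d)%nat) (HdY : (2 <= dY)%nat) :
  null_set (pair_idx d dY)
    (fun z => exists W P, is_trans d dY W /\ is_prob d P /\
       agree (pair_idx d dY) z (pair_coords W P) /\
       ~ (trivK d dY W /\ fullV d dY W P))
  /\
  null_set (W_idx d dY)
    (fun z => exists W, is_trans d dY W /\
       agree (W_idx d dY) z (W_coords W) /\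
       ~ (irreducible d (sumW dY W) /\ trivK d dY W /\
          forall P, stationary d dY W P -> fullV d dY W P)).
Proof.
  split; apply negligible_null_set.
  - intros E. pose proof (In_pair_idx_W d dY 1 0 0) as H. rewrite E in H. apply H; lia.
  - eapply negligible_sub; [apply bad_pair_in_zero_sets; auto|].
    apply (zero_sets_negligible pair_coord_eq_dec). apply pair_polys_nondegenerate; auto.
  - intros E. pose proof (In_W_idx d dY 1 0 0) as H. rewrite E in H. apply H; lia.
  - eapply negligible_sub; [apply bad_matrix_in_zero_sets; auto|].
    apply (zero_sets_negligible coord_eq_dec). apply matrix_polys_nondegenerate; auto.
Qed.
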